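(* Let $M>0$, $\beta^*>0$, $0<I_0<M$ and $0<S_0<M$ with $S_0+I_0=M$. Let $g$ be the log-normal density \[ g(t)=\frac{1}{t\sigma\sqrt{2\pi}}\exp\!\left(-\frac{(\ln t-\mu)^2}{2\sigma^2}\right)\ (t>0),\qquad g(t)=0\ (t\le 0), \] with $\mu\in\mathbb{R}$, $\sigma>0$. Then the system \[ I'(t)=\beta^*(M-I(t))\Big(I(t)-\int_0^t g(t-s)I(s)\,ds\Big),\qquad S'(t)=-\beta^* S(t)\Big(I(t)-\int_0^t g(t-s)I(s)\,ds\Big), \] with $S(0)=S_0$, $I(0)=I_0$, has a unique $C^1$ solution $(S,I)$ on $[0,\infty)$. Moreover $0<S(t)<M$ and $0<I(t)<M$ for all $t\ge 0$, $S(t)$ decreases to a limit $S_\infty>0$, and $I(t)$ increases to a limit $I_\infty<M$.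
   Context: $M$ denotes the total (constant) population; $\beta^*=\beta/M$ with $0<\beta<1$. *)

From Stdlib Require Import Reals.
From Coquelicot Require Import Coquelicot.
Open Scope R_scope.

Definition lognormal (mu sigma : R) (t : R) : R :=
  if Rlt_dec 0 t then
    / (t * sigma * sqrt (2 * PI)) * exp (- (ln t - mu) ^ 2 / (2 * sigma ^ 2))
  else 0.

Definition conv (g I : R -> R) (t : R) : R :=
  RInt (fun s => g (t - s) * I s) 0 t.

Definition deriv_on_nonneg (f f' : R -> R) : Prop :=
  forall t, 0 <= t ->
    filterlim (fun h => (f (t + h) - f t) / h)
      (within (fun h => h <> 0 /\ 0 <= t + h) (locally 0))
      (locally (f' t)).

Definition cont_on_nonneg (f : R -> R) : Prop :=
  forall t, 0 <= t -> filterlim f (within (fun s => 0 <= s) (locally t)) (locally (f t)).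

Definition is_C1_solution (M bstar S0 I0 : R) (g : R -> R) (S I : R -> R) : Prop :=
  exists dS dI : R -> R,
    deriv_on_nonneg S dS /\ deriv_on_nonneg I dI /\
    cont_on_nonneg dS /\ cont_on_nonneg dI /\
    S 0 = S0 /\ I 0 = I0 /\
    (forall t, 0 <= t -> dI t = bstar * (M - I t) * (I t - conv g I t)) /\
    (forall t, 0 <= t -> dS t = - bstar * S t * (I t - conv g I t)).

From Stdlib Require Import Reals Lra Lia Classical.
From Coquelicot Require Import Coquelicot.
Open Scope R_scope.

(* Since S + I is conserved and S' = - bstar S X with X = I - g * I, a solution satisfies
   I = M - S0 exp (- bstar Y_I), where Y_I (t) = int_0^t X.  The map I |-> M - S0 exp (- bstar Y_I)
   preserves the nondecreasing Lipschitz functions with values in [I0, M] (g has mass at most 1,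
   so X >= 0), and it halves distances for the weighted norm sup_t |I t| exp (- 4 S0 bstar t),
   so Picard iteration converges; uniqueness follows from Gronwall's lemma.  Moreover
   Y_I (T) = int_0^T I s (1 - G (T - s)) ds <= M int_0^oo (1 - G), the mean of the kernel, which
   keeps I below M - S0 exp (- bstar M mean) < M.  For the log-normal kernel,
   G t = (1 + erf ((ln t - mu) / (sigma sqrt 2))) / 2, so G <= 1 and 1 - G u = O (u^-2) (finite
   mean) follow from the Gaussian integral, obtained from the classical identity
   d/dx [(int_0^x exp (- z^2) dz)^2 + int_0^1 exp (- x^2 (1 + t^2)) / (1 + t^2) dt] = 0. *)

Lemma Rabs_Rmax0_sub_le a b : Rabs (Rmax 0 a - Rmax 0 b) <= Rabs (a - b).
Proof.
  unfold Rmax; destruct (Rle_dec 0 a), (Rle_dec 0 b); unfold Rabs;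
    repeat destruct Rcase_abs; lra.
Qed.

Lemma Rabs_le_eps_eq_0 x : (forall eps, 0 < eps -> Rabs x <= eps) -> x = 0.
Proof.
  intros Hx. apply Rabs_eq_0. apply Rle_antisym; [|apply Rabs_pos].
  apply Rle_plus_epsilon. intros eps Heps. rewrite Rplus_0_l. auto.
Qed.

Lemma exp_le_exp x y : x <= y -> exp x <= exp y.
Proof. intros [Hxy | ->]; [left; apply exp_increasing, Hxy | right; reflexivity]. Qed.

Lemma half_pow_small (C eps : R) : 0 < eps ->
  exists N, forall n, (N <= n)%nat -> C * (/ 2) ^ n < eps.
Proof.
  intros Heps. assert (Hr : Rabs (/ 2) < 1) by (rewrite Rabs_pos_eq; lra).
  assert (HC : 0 < eps / (Rabs C + 1)) by (apply Rdiv_lt_0_compat; pose proof (Rabs_pos C); lra).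
  destruct (pow_lt_1_zero _ Hr _ HC) as [N HN].
  exists N. intros n Hn. specialize (HN n Hn). rewrite Rabs_pos_eq in HN by (apply pow_le; lra).
  pose proof (pow_le (/ 2) n ltac:(lra)). pose proof (Rle_abs C). pose proof (Rabs_pos C).
  apply Rle_lt_trans with ((Rabs C + 1) * (/ 2) ^ n); [nra|].
  apply Rlt_le_trans with ((Rabs C + 1) * (eps / (Rabs C + 1))).
  - apply Rmult_lt_compat_l; lra.
  - right. field. lra.
Qed.

Lemma is_lim_seq_le_R (u v : nat -> R) (l l' : R) :
  is_lim_seq u l -> is_lim_seq v l' -> (forall n, u n <= v n) -> l <= l'.
Proof. intros Hu Hv Huv. exact (is_lim_seq_le u v l l' Huv Hu Hv). Qed.

Lemma ex_derive_continuous_R (f : R -> R) x : ex_derive f x -> continuous f x.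
Proof. apply (ex_derive_continuous (K := R_AbsRing) (V := R_NormedModule)). Qed.

Lemma ex_RInt_continuous_R (f : R -> R) a b : (forall x, continuous f x) -> ex_RInt f a b.
Proof. intros Hf. apply (ex_RInt_continuous (V := R_CompleteNormedModule)). auto. Qed.

Lemma continuous_plus_R (f h : R -> R) x :
  continuous f x -> continuous h x -> continuous (fun s => f s + h s) x.
Proof. apply (continuous_plus (V := R_NormedModule)). Qed.

Lemma continuous_minus_R (f h : R -> R) x :
  continuous f x -> continuous h x -> continuous (fun s => f s - h s) x.
Proof. apply (continuous_minus (V := R_NormedModule)). Qed.

Lemma continuous_mult_R (f h : R -> R) x :
  continuous f x -> continuous h x -> continuous (fun s => f s * h s) x.
Proof. apply (continuous_mult (K := R_AbsRing)). Qed.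

Lemma is_derive_plus_R (f h : R -> R) x df dh :
  is_derive f x df -> is_derive h x dh -> is_derive (fun s => f s + h s) x (df + dh).
Proof. apply (is_derive_plus (V := R_NormedModule)). Qed.

Lemma is_derive_minus_R (f h : R -> R) x df dh :
  is_derive f x df -> is_derive h x dh -> is_derive (fun s => f s - h s) x (df - dh).
Proof. apply (is_derive_minus (V := R_NormedModule)). Qed.

Lemma is_derive_mult_R (f h : R -> R) x df dh :
  is_derive f x df -> is_derive h x dh ->
  is_derive (fun s => f s * h s) x (df * h x + f x * dh).
Proof. intros Hf Hh. apply (is_derive_mult (K := R_AbsRing)); auto. apply Rmult_comm. Qed.

Lemma lipschitz_modulus (L : R) (eps : posreal) :
  exists d : posreal, forall u, Rabs u < d -> L * Rabs u < eps.
Proof.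
  assert (Hd : 0 < eps / (Rabs L + 1)).
  { apply Rdiv_lt_0_compat; [apply cond_pos | pose proof (Rabs_pos L); lra]. }
  exists (mkposreal _ Hd). simpl. intros u Hu.
  pose proof (Rabs_pos L). pose proof (Rabs_pos u). pose proof (Rle_abs L).
  apply Rle_lt_trans with ((Rabs L + 1) * Rabs u); [nra|].
  apply Rlt_le_trans with ((Rabs L + 1) * (eps / (Rabs L + 1))).
  - apply Rmult_lt_compat_l; lra.
  - right. field. lra.
Qed.

Lemma lipschitz_continuous (f : R -> R) (L x : R) :
  (forall a b, Rabs (f a - f b) <= L * Rabs (a - b)) -> continuous f x.
Proof.
  intros Hf. apply filterlim_locally. intros eps.
  destruct (lipschitz_modulus L eps) as [d Hd]. exists d. intros y Hy.
  eapply Rle_lt_trans; [apply Hf | apply Hd, Hy].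
Qed.

Lemma cont_on_nonneg_of_continuous (f F : R -> R) :
  (forall t, 0 <= t -> f t = F t) -> (forall t, continuous F t) -> cont_on_nonneg f.
Proof.
  intros HfF HF t Ht. apply filterlim_locally. intros eps.
  specialize (HF t). apply filterlim_locally with (eps := eps) in HF. destruct HF as [d Hd].
  exists d. intros s Hs Hs0. rewrite !HfF by assumption. apply Hd, Hs.
Qed.

Lemma cont_on_nonneg_opp f : cont_on_nonneg f -> cont_on_nonneg (fun t => - f t).
Proof.
  intros Hf t Ht. eapply filterlim_comp;
    [apply Hf, Ht | apply (filterlim_opp (K := R_AbsRing) (V := R_NormedModule))].
Qed.

Lemma deriv_on_nonneg_is_derive f f' t : deriv_on_nonneg f f' -> 0 < t -> is_derive f t (f' t).
Proof.
  intros Hf Ht. apply is_derive_Reals. intros eps Heps.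
  specialize (Hf t (Rlt_le _ _ Ht)).
  apply filterlim_locally with (eps := mkposreal _ Heps) in Hf. destruct Hf as [d Hd].
  assert (Hdt : 0 < Rmin d t) by (apply Rmin_pos; [apply cond_pos | lra]).
  exists (mkposreal _ Hdt). simpl. intros h Hh0 Hh.
  pose proof (Rmin_l d t). pose proof (Rmin_r d t).
  apply Hd.
  - change (Rabs (h - 0) < d). rewrite Rminus_0_r. lra.
  - split; auto. assert (Hht : Rabs h < t) by lra. revert Hht. unfold Rabs; destruct Rcase_abs; lra.
Qed.

Lemma deriv_on_nonneg_cont f f' : deriv_on_nonneg f f' -> cont_on_nonneg f.
Proof.
  intros Hf t Ht. apply filterlim_locally. intros eps.
  specialize (Hf t Ht). apply filterlim_locally with (eps := mkposreal _ Rlt_0_1) in Hf.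
  destruct Hf as [d Hd].
  destruct (lipschitz_modulus (Rabs (f' t) + 1) eps) as [d' Hd'].
  assert (Hdd : 0 < Rmin d d') by (apply Rmin_pos; apply cond_pos).
  exists (mkposreal _ Hdd). intros s Hs Hs0. change (Rabs (s - t) < Rmin d d') in Hs.
  change (Rabs (f s - f t) < eps).
  pose proof (Rmin_l d d'). pose proof (Rmin_r d d').
  destruct (Req_dec s t) as [-> | Hst].
  { rewrite Rminus_diag, Rabs_R0. apply cond_pos. }
  set (h := s - t) in *.
  assert (Hq : Rabs ((f (t + h) - f t) / h - f' t) < 1).
  { apply Hd; [change (Rabs (h - 0) < d); rewrite Rminus_0_r; lra | unfold h; split; lra]. }
  unfold h in Hq; rewrite Rplus_minus in Hq; fold h in Hq.
  assert (Hslope : Rabs ((f s - f t) / h) <= Rabs (f' t) + 1).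
  { replace ((f s - f t) / h) with (((f s - f t) / h - f' t) + f' t) by ring.
    eapply Rle_trans; [apply Rabs_triang | lra]. }
  replace (f s - f t) with (h * ((f s - f t) / h)) by (field; unfold h; intro; apply Hst; lra).
  rewrite Rabs_mult. apply Rle_lt_trans with ((Rabs (f' t) + 1) * Rabs h); [|apply Hd'; lra].
  rewrite Rmult_comm. apply Rmult_le_compat_r; [apply Rabs_pos | exact Hslope].
Qed.

Lemma cont_on_nonneg_clamp f t : cont_on_nonneg f -> continuous (fun s => f (Rmax 0 s)) t.
Proof.
  intros Hf. specialize (Hf (Rmax 0 t) (Rmax_l 0 t)).
  apply filterlim_locally. intros eps.
  apply filterlim_locally with (eps := eps) in Hf. destruct Hf as [d Hd].
  exists d. intros s Hs. apply Hd; [|apply Rmax_l].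
  change (Rabs (Rmax 0 s - Rmax 0 t) < d).
  eapply Rle_lt_trans; [apply Rabs_Rmax0_sub_le | exact Hs].
Qed.

Lemma deriv_on_nonneg_clamp f f' t :
  deriv_on_nonneg f f' -> 0 < t -> is_derive (fun s => f (Rmax 0 s)) t (f' t).
Proof.
  intros Hf Ht. apply (is_derive_ext_loc f).
  - exists (mkposreal _ Ht). intros s Hs. change (Rabs (s - t) < t) in Hs.
    rewrite Rmax_right; [reflexivity|]. revert Hs. unfold Rabs; destruct Rcase_abs; lra.
  - apply deriv_on_nonneg_is_derive; auto.
Qed.

Lemma deriv_on_nonneg_const_minus f f' c :
  deriv_on_nonneg f f' -> deriv_on_nonneg (fun t => c - f t) (fun t => - f' t).
Proof.
  intros Hf t Ht.
  apply (filterlim_ext (fun h => - ((f (t + h) - f t) / h))); [intros h; unfold Rdiv; ring|].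
  eapply filterlim_comp;
    [apply Hf, Ht | apply (filterlim_opp (K := R_AbsRing) (V := R_NormedModule))].
Qed.

Lemma deriv_on_nonneg_of_is_derive f F f' :
  (forall t, 0 <= t -> f t = F t) -> (forall t, 0 <= t -> is_derive F t (f' t)) ->
  deriv_on_nonneg f f'.
Proof.
  intros Hf HF t Ht. apply filterlim_locally. intros eps.
  specialize (HF t Ht). apply is_derive_Reals in HF.
  destruct (HF eps (cond_pos eps)) as [d Hd].
  exists d. intros h Hh [Hh0 Hth]. change (Rabs (h - 0) < d) in Hh. rewrite Rminus_0_r in Hh.
  change (Rabs ((f (t + h) - f t) / h - f' t) < eps).
  rewrite !Hf by lra. apply Hd; auto.
Qed.

Lemma RInt_minus_R (f h : R -> R) a b : ex_RInt f a b -> ex_RInt h a b ->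
  RInt (fun x => f x - h x) a b = RInt f a b - RInt h a b.
Proof. apply (RInt_minus (V := R_CompleteNormedModule)). Qed.

Lemma ex_RInt_minus_R (f h : R -> R) a b : ex_RInt f a b -> ex_RInt h a b ->
  ex_RInt (fun x => f x - h x) a b.
Proof. apply (ex_RInt_minus (V := R_NormedModule)). Qed.

Lemma RInt_Chasles_R (f : R -> R) a b c : ex_RInt f a b -> ex_RInt f b c ->
  RInt f a b + RInt f b c = RInt f a c.
Proof. apply (RInt_Chasles (V := R_CompleteNormedModule)). Qed.

Lemma RInt_const_R c a b : RInt (fun _ => c) a b = (b - a) * c.
Proof. rewrite RInt_const. reflexivity. Qed.

Lemma RInt_point_R (f : R -> R) a : RInt f a a = 0.
Proof. rewrite RInt_point. reflexivity. Qed.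

Lemma RInt_mult_const_r (f : R -> R) c a b : ex_RInt f a b ->
  RInt (fun x => f x * c) a b = RInt f a b * c.
Proof.
  intros Hf. assert (Hscal := RInt_scal (V := R_CompleteNormedModule) f a b c Hf).
  change (RInt (fun x => c * f x) a b = c * RInt f a b) in Hscal.
  rewrite Rmult_comm, <- Hscal. apply RInt_ext. intros; apply Rmult_comm.
Qed.

Lemma RInt_abs_le (f h : R -> R) a b : a <= b -> ex_RInt f a b -> ex_RInt h a b ->
  (forall x, a < x < b -> Rabs (f x) <= h x) -> Rabs (RInt f a b) <= RInt h a b.
Proof.
  intros Hab Hf Hh Hfh. eapply Rle_trans; [apply abs_RInt_le; auto|].
  apply RInt_le; auto. apply (ex_RInt_norm f a b Hf).
Qed.

Lemma RInt_reflect (f : R -> R) t : ex_RInt f 0 t -> ex_RInt (fun y => f (t - y)) 0 t ->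
  RInt (fun y => f (t - y)) 0 t = RInt f 0 t.
Proof.
  intros Hf Hfr.
  assert (Hlin := RInt_comp_lin (V := R_CompleteNormedModule) f (-1) t 0 t).
  replace (-1 * 0 + t) with t in Hlin by ring. replace (-1 * t + t) with 0 in Hlin by ring.
  specialize (Hlin (ex_RInt_swap _ _ _ Hf)).
  assert (Hswap := opp_RInt_swap (V := R_CompleteNormedModule) f 0 t Hf).
  assert (Hscal := RInt_scal (V := R_CompleteNormedModule) (fun y => f (t - y)) 0 t (-1) Hfr).
  change (RInt (fun y => -1 * f (-1 * y + t)) 0 t = RInt f t 0) in Hlin.
  change (- RInt f 0 t = RInt f t 0) in Hswap.
  change (RInt (fun y => -1 * f (t - y)) 0 t = -1 * RInt (fun y => f (t - y)) 0 t) in Hscal.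
  rewrite (RInt_ext _ (fun y => -1 * f (t - y))) in Hlin
    by (intros y _; do 2 f_equal; ring).
  lra.
Qed.

Lemma RInt_antiderivative (F f : R -> R) a b : a <= b ->
  (forall x, a <= x <= b -> is_derive F x (f x)) ->
  (forall x, a <= x <= b -> continuous f x) -> RInt f a b = F b - F a.
Proof.
  intros Hab HF Hf. apply is_RInt_unique.
  apply (is_RInt_derive (V := R_CompleteNormedModule));
    rewrite Rmin_left, Rmax_right by exact Hab; auto.
Qed.

Lemma is_derive_RInt_R (f : R -> R) a x : (forall y, continuous f y) ->
  is_derive (fun t => RInt f a t) x (f x).
Proof.
  intros Hf. apply (is_derive_RInt (V := R_NormedModule) f _ a x); auto.
  exists (mkposreal _ Rlt_0_1). intros y _.
  apply (RInt_correct (V := R_CompleteNormedModule)). apply ex_RInt_continuous_R, Hf.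
Qed.

Lemma is_derive_RInt_abs (f : R -> R) x : (forall y, continuous f y) ->
  is_derive (fun s => RInt (fun r => Rabs (f r)) 0 s) x (Rabs (f x)).
Proof.
  intros Hf. apply (is_derive_RInt_R (fun r => Rabs (f r))).
  intros y. apply (continuous_Rabs_comp f), Hf.
Qed.

Lemma RInt_abs_nonneg (f : R -> R) x : (forall y, continuous f y) -> 0 <= x ->
  0 <= RInt (fun r => Rabs (f r)) 0 x.
Proof.
  intros Hf Hx. apply RInt_ge_0; [exact Hx | | intros; apply Rabs_pos].
  apply ex_RInt_continuous_R. intros y. apply (continuous_Rabs_comp f), Hf.
Qed.

Lemma is_derive_0_const (f : R -> R) : (forall x, is_derive f x 0) -> forall x y, f x = f y.
Proof.
  intros Hf x y. destruct (Rtotal_order x y) as [Hxy | [-> | Hxy]]; [| reflexivity |].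
  - apply (eq_is_derive (V := R_NormedModule)); auto.
  - symmetry. apply (eq_is_derive (V := R_NormedModule)); auto.
Qed.

(* Gronwall: [exp (- C s) * V s] is nonincreasing.  The mean value point of [MVT_gen] may be
   an endpoint, where nothing is known about [dV]; the derivative is set to 0 there. *)
Lemma gronwall_vanish (V dV : R -> R) (C t : R) : 0 <= t ->
  (forall c, 0 < c < t -> is_derive V c (dV c)) ->
  (forall c, 0 <= c <= t -> continuity_pt V c) ->
  (forall c, 0 < c < t -> dV c <= C * V c) ->
  V 0 = 0 -> 0 <= V t -> V t = 0.
Proof.
  intros Ht HdV HV Hle HV0 HVt.
  set (F := fun s => exp (- C * s) * V s).
  set (dF := fun s => exp (- C * s) * (dV s - C * V s)).
  destruct (MVT_gen F 0 t (fun s => if Rlt_dec 0 s then if Rlt_dec s t then dF s else 0 else 0))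
    as [c [_ Hc]].
  - intros x Hx. rewrite Rmin_left, Rmax_right in Hx by lra.
    destruct (Rlt_dec 0 x); [|lra]. destruct (Rlt_dec x t); [|lra].
    unfold F, dF. replace (exp (- C * x) * (dV x - C * V x))
      with ((- C) * exp (- C * x) * V x + exp (- C * x) * dV x) by ring.
    apply (is_derive_mult_R (fun s => exp (- C * s)) V); [|apply HdV; lra].
    auto_derive; auto. ring.
  - intros x Hx. rewrite Rmin_left, Rmax_right in Hx by lra.
    apply continuity_pt_filterlim, continuous_mult_R.
    + apply ex_derive_continuous_R. auto_derive. auto.
    + apply continuity_pt_filterlim, HV. lra.
  - assert (HdF : (if Rlt_dec 0 c then if Rlt_dec c t then dF c else 0 else 0) <= 0).
    { destruct (Rlt_dec 0 c) as [Hc0 | _]; [|lra]. destruct (Rlt_dec c t) as [Hct | _]; [|lra].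
      unfold dF. pose proof (exp_pos (- C * c)). specialize (Hle c (conj Hc0 Hct)). nra. }
    unfold F in Hc. rewrite HV0, Rmult_0_r in Hc.
    pose proof (exp_pos (- C * t)). nra.
Qed.

Lemma is_lim_nondecreasing_bounded (f : R -> R) B :
  (forall t t', 0 <= t <= t' -> f t <= f t') -> (forall t, 0 <= t -> f t <= B) ->
  exists l, l <= B /\ is_lim f p_infty l.
Proof.
  intros Hmon HB.
  set (E := fun y => exists t, 0 <= t /\ y = f t).
  destruct (completeness E) as [l [Hub Hlub]].
  - exists B. intros y [t [Ht ->]]. auto.
  - exists (f 0), 0. split; lra.
  - exists l. split.
    { apply Hlub. intros y [t [Ht ->]]. auto. }
    apply is_lim_spec. intros eps.
    destruct (classic (exists t0, 0 <= t0 /\ l - eps < f t0)) as [[t0 [Ht0 Hlt]] | Hno].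
    + exists t0. intros t Ht. assert (f t0 <= f t) by (apply Hmon; lra).
      assert (f t <= l) by (apply Hub; exists t; split; [lra | auto]).
      rewrite Rabs_left1; lra.
    + exfalso. assert (l <= l - eps).
      { apply Hlub. intros y [t [Ht ->]]. apply Rnot_lt_le. intros Hlt. apply Hno. eauto. }
      pose proof (cond_pos eps). lra.
Qed.

Definition cdf (g : R -> R) (t : R) : R := RInt g 0 t.

Lemma is_derive_cdf (g : R -> R) t : (forall x, continuous g x) -> is_derive (cdf g) t (g t).
Proof. apply is_derive_RInt_R. Qed.

Lemma Derive_cdf (g : R -> R) t :
  (forall x, continuous g x) -> Derive (fun x : R => cdf g x) t = g t.
Proof. intros Hg. apply is_derive_unique, is_derive_cdf, Hg. Qed.

Lemma cdf_continuous (g : R -> R) t : (forall x, continuous g x) -> continuous (cdf g) t.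
Proof. intros Hg. apply ex_derive_continuous_R. eexists. apply is_derive_cdf, Hg. Qed.

Lemma survival_continuous (g : R -> R) u :
  (forall x, continuous g x) -> continuous (fun u => 1 - cdf g u) u.
Proof. intros Hg. apply continuous_minus_R; [apply continuous_const | apply cdf_continuous, Hg]. Qed.

(** * The Gaussian integral *)

Definition gauss (z : R) : R := exp (- (z * z)).

Definition gauss_int (x : R) : R := RInt gauss 0 x.

Lemma gauss_continuous x : continuous gauss x.
Proof. apply ex_derive_continuous_R. unfold gauss. auto_derive. auto. Qed.

Lemma is_derive_gauss_int x : is_derive gauss_int x (gauss x).
Proof. apply is_derive_RInt_R, gauss_continuous. Qed.

Lemma Derive_gauss_int y : Derive (fun x : R => gauss_int x) y = gauss y.
Proof. apply is_derive_unique, is_derive_gauss_int. Qed.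

Lemma gauss_int_nonneg x : 0 <= x -> 0 <= gauss_int x.
Proof.
  intros Hx. apply RInt_ge_0; auto.
  - apply ex_RInt_continuous_R, gauss_continuous.
  - intros; left; apply exp_pos.
Qed.

Lemma gauss_int_odd x : gauss_int (- x) = - gauss_int x.
Proof.
  unfold gauss_int.
  assert (Hlin := RInt_comp_lin (V := R_CompleteNormedModule) gauss (-1) 0 0 x
                    (ex_RInt_continuous_R _ _ _ gauss_continuous)).
  replace (-1 * 0 + 0) with 0 in Hlin by ring. replace (-1 * x + 0) with (- x) in Hlin by ring.
  rewrite <- Hlin, <- (RInt_opp (V := R_CompleteNormedModule))
    by apply ex_RInt_continuous_R, gauss_continuous.
  apply RInt_ext. intros y _. unfold gauss. change (-1 * exp (- ((-1 * y + 0) * (-1 * y + 0)))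
    = - exp (- (y * y))). replace ((-1 * y + 0) * (-1 * y + 0)) with (y * y) by ring. ring.
Qed.

(* The classical trick: [gauss_int x ^ 2 + gauss_aux x] has derivative zero. *)
Definition gauss_aux_integrand (x t : R) : R := exp (- (x * x) * (1 + t * t)) / (1 + t * t).

Definition gauss_aux (x : R) : R := RInt (gauss_aux_integrand x) 0 1.

Lemma is_derive_gauss_aux_integrand x t :
  is_derive (fun u => gauss_aux_integrand u t) x (-2 * x * exp (- (x * x) * (1 + t * t))).
Proof.
  assert (0 < 1 + t * t) by nra.
  unfold gauss_aux_integrand. auto_derive; [lra|]. field. lra.
Qed.

Lemma ex_RInt_gauss_aux_integrand x a b : ex_RInt (gauss_aux_integrand x) a b.
Proof.
  apply ex_RInt_continuous_R. intros t. apply ex_derive_continuous_R.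
  unfold gauss_aux_integrand. auto_derive. nra.
Qed.

Lemma is_derive_gauss_aux x :
  is_derive gauss_aux x (RInt (fun t => -2 * x * exp (- (x * x) * (1 + t * t))) 0 1).
Proof.
  rewrite <- (RInt_ext (fun t => Derive (fun u => gauss_aux_integrand u t) x))
    by (intros t _; apply is_derive_unique, is_derive_gauss_aux_integrand).
  apply is_derive_RInt_param.
  - exists (mkposreal _ Rlt_0_1). intros y _ t _. eexists. apply is_derive_gauss_aux_integrand.
  - intros t _.
    apply continuity_2d_pt_ext with (f := fun u v => -2 * u * exp (- (u * u) * (1 + v * v))).
    { intros u v. symmetry. apply is_derive_unique, is_derive_gauss_aux_integrand. }
    apply continuity_2d_pt_mult.
    + apply continuity_2d_pt_mult; [apply continuity_2d_pt_const | apply continuity_2d_pt_id1].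
    + apply continuity_1d_2d_pt_comp with (f := exp).
      * apply derivable_continuous_pt, derivable_pt_exp.
      * apply continuity_2d_pt_mult.
        -- apply continuity_2d_pt_opp, continuity_2d_pt_mult; apply continuity_2d_pt_id1.
        -- apply continuity_2d_pt_plus; [apply continuity_2d_pt_const|].
           apply continuity_2d_pt_mult; apply continuity_2d_pt_id2.
  - exists (mkposreal _ Rlt_0_1). intros y _. apply ex_RInt_gauss_aux_integrand.
Qed.

Lemma gauss_aux_derivative x :
  RInt (fun t => -2 * x * exp (- (x * x) * (1 + t * t))) 0 1 = -2 * gauss x * gauss_int x.
Proof.
  rewrite (RInt_ext _ (fun t => scal (-2 * gauss x) (scal x (gauss (x * t + 0))))).
  2:{ intros t _. change (-2 * x * exp (- (x * x) * (1 + t * t))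
        = -2 * gauss x * (x * gauss (x * t + 0))).
      unfold gauss. replace (- (x * x) * (1 + t * t))
        with (- (x * x) + - ((x * t + 0) * (x * t + 0))) by ring.
      rewrite exp_plus. ring. }
  rewrite (RInt_scal (V := R_CompleteNormedModule)).
  2:{ apply (ex_RInt_ext (fun t => x * gauss (x * t + 0))); [reflexivity|].
      apply ex_RInt_continuous_R. intros t. apply ex_derive_continuous_R.
      unfold gauss. auto_derive. auto. }
  rewrite (RInt_comp_lin (V := R_CompleteNormedModule))
    by apply ex_RInt_continuous_R, gauss_continuous.
  unfold gauss_int. change (-2 * gauss x * RInt gauss (x * 0 + 0) (x * 1 + 0)
    = -2 * gauss x * RInt gauss 0 x).
  do 2 f_equal; ring.
Qed.

Lemma gauss_int_sq_plus_aux x : gauss_int x ^ 2 + gauss_aux x = PI / 4.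
Proof.
  assert (Hconst : forall y, is_derive (fun x => gauss_int x ^ 2 + gauss_aux x) y 0).
  { intros y. auto_derive.
    - repeat split; [eexists; apply is_derive_gauss_int | eexists; apply is_derive_gauss_aux].
    - rewrite Derive_gauss_int.
      replace (Derive (fun x : R => gauss_aux x) y) with (-2 * gauss y * gauss_int y)
        by (rewrite <- gauss_aux_derivative; symmetry; apply is_derive_unique, is_derive_gauss_aux).
      ring. }
  rewrite (is_derive_0_const _ Hconst x 0).
  unfold gauss_int. rewrite RInt_point_R.
  unfold gauss_aux. rewrite (RInt_ext _ (fun t => / (1 + t ^ 2))).
  2:{ intros t _. change (exp (- (0 * 0) * (1 + t * t)) / (1 + t * t) = / (1 + t ^ 2)).
      replace (- (0 * 0) * (1 + t * t)) with 0 by ring. rewrite exp_0. field. nra. }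
  rewrite (RInt_antiderivative atan); [| lra | |].
  - rewrite atan_1, atan_0. field.
  - intros y _. apply is_derive_Reals, derivable_pt_lim_atan.
  - intros y _. apply ex_derive_continuous_R. auto_derive. nra.
Qed.

Lemma gauss_aux_bounds x : 0 <= gauss_aux x <= exp (- (x * x)).
Proof.
  assert (Hex := ex_RInt_gauss_aux_integrand x 0 1).
  assert (Hle : forall t, exp (- (x * x) * (1 + t * t)) <= exp (- (x * x))).
  { intros t. apply exp_le_exp. assert (0 <= x * x * (t * t)) by (apply Rmult_le_pos; nra). nra. }
  split.
  - apply RInt_ge_0; [lra | exact Hex|]. intros t _. unfold gauss_aux_integrand.
    apply Rdiv_le_0_compat; [left; apply exp_pos | nra].
  - apply Rle_trans with (RInt (fun _ => exp (- (x * x))) 0 1).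
    + apply RInt_le; [lra | exact Hex | apply ex_RInt_const |].
      intros t _. unfold gauss_aux_integrand. specialize (Hle t).
      pose proof (exp_pos (- (x * x) * (1 + t * t))).
      apply Rle_trans with (exp (- (x * x) * (1 + t * t)) / 1); [|lra].
      apply Rmult_le_compat_l; [lra|]. apply Rinv_le_contravar; nra.
    + rewrite RInt_const_R. lra.
Qed.

Lemma sqrt_PI_pos : 0 < sqrt PI.
Proof. apply sqrt_lt_R0, PI_RGT_0. Qed.

Lemma gauss_int_tail x : 0 <= x ->
  0 <= sqrt PI / 2 - gauss_int x <= 2 / sqrt PI * exp (- (x * x)).
Proof.
  intros Hx. pose proof (gauss_int_nonneg x Hx). pose proof (gauss_int_sq_plus_aux x).
  pose proof (gauss_aux_bounds x). pose proof sqrt_PI_pos.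
  assert (Hsq : sqrt PI * sqrt PI = PI) by (apply sqrt_sqrt; pose proof PI_RGT_0; lra).
  set (a := sqrt PI / 2) in *. set (e := gauss_int x) in *.
  assert (Hfac : (a - e) * (a + e) = gauss_aux x) by (unfold a; simpl in *; nra).
  assert (Hae : 0 <= a - e).
  { apply Rnot_lt_le. intros Hlt.
    assert ((a - e) * (a + e) < 0) by (apply Rmult_neg_pos; unfold a in *; lra). lra. }
  split; auto.
  replace (2 / sqrt PI) with (/ a) by (unfold a; field; lra).
  apply Rmult_le_reg_r with a; [unfold a; lra|].
  replace (/ a * exp (- (x * x)) * a) with (exp (- (x * x))) by (field; unfold a; lra).
  assert (0 < a) by (unfold a; lra). nra.
Qed.

Lemma gauss_int_le x : gauss_int x <= sqrt PI / 2.
Proof.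
  destruct (Rle_dec 0 x) as [Hx | Hx].
  - pose proof (gauss_int_tail x Hx). lra.
  - replace x with (- - x) by ring. rewrite gauss_int_odd.
    pose proof (gauss_int_nonneg (- x)). pose proof sqrt_PI_pos. lra.
Qed.

(** * The log-normal density *)

Lemma exp_neg_sq_ln_small (a b C : R) (eps : posreal) : 0 < b ->
  exists d : posreal, forall s, 0 < s < d -> C * exp (- ((ln s - a) / b) ^ 2) < eps.
Proof.
  intros Hb.
  destruct (Rle_lt_dec C 0) as [HC | HC].
  { exists (mkposreal _ Rlt_0_1). intros s _. pose proof (exp_pos (- ((ln s - a) / b) ^ 2)).
    pose proof (cond_pos eps). nra. }
  set (Y := 1 + Rabs (ln (C / eps))).
  assert (HY : ln (C / eps) < Y ^ 2).
  { pose proof (Rle_abs (ln (C / eps))). pose proof (Rabs_pos (ln (C / eps))). unfold Y. nra. }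
  exists (mkposreal _ (exp_pos (a - b * Y))). simpl. intros s [Hs0 Hs].
  assert (Hln : (ln s - a) / b < - Y).
  { apply Rmult_lt_reg_r with b; [exact Hb|]. unfold Rdiv. rewrite Rmult_assoc, Rinv_l by lra.
    apply ln_increasing in Hs; [|exact Hs0]. rewrite ln_exp in Hs. lra. }
  assert (Hexp : exp (- ((ln s - a) / b) ^ 2) < eps / C).
  { assert (HCe : 0 < C / eps) by (apply Rdiv_lt_0_compat; [exact HC | apply cond_pos]).
    replace (eps / C) with (/ (C / eps)) by (pose proof (cond_pos eps); field; split; lra).
    rewrite <- (exp_ln (/ (C / eps))), ln_Rinv by (auto || apply Rinv_0_lt_compat, HCe).
    apply exp_increasing.
    assert (Y ^ 2 < ((ln s - a) / b) ^ 2) by (unfold Y in *; pose proof (Rabs_pos (ln (C / eps))); nra).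
    lra. }
  apply Rmult_lt_compat_l with (r := C) in Hexp; [|exact HC].
  replace (C * (eps / C)) with (pos eps) in Hexp by (field; lra). exact Hexp.
Qed.

Lemma sqrt_2_pos : 0 < sqrt 2.
Proof. apply sqrt_lt_R0. lra. Qed.

Section LogNormal.

Variables mu sigma : R.
Hypothesis Hsigma : 0 < sigma.

Let g := lognormal mu sigma.

Lemma sq_div_sigma_sqrt_2 w : (w / (sigma * sqrt 2)) ^ 2 = w ^ 2 / (2 * sigma ^ 2).
Proof.
  pose proof sqrt_2_pos. assert (H2 : sqrt 2 * sqrt 2 = 2) by (apply sqrt_sqrt; lra).
  replace ((w / (sigma * sqrt 2)) ^ 2) with (w ^ 2 / (sigma ^ 2 * (sqrt 2 * sqrt 2)))
    by (field; lra).
  rewrite H2. field. lra.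
Qed.

Definition lognormal_max : R := / (sigma * sqrt (2 * PI)) * exp (sigma ^ 2 / 2 - mu).

Lemma lognormal_max_pos : 0 < lognormal_max.
Proof.
  unfold lognormal_max. pose proof (exp_pos (sigma ^ 2 / 2 - mu)).
  assert (0 < sqrt (2 * PI)) by (apply sqrt_lt_R0; pose proof PI_RGT_0; lra).
  assert (0 < / (sigma * sqrt (2 * PI))) by (apply Rinv_0_lt_compat; nra). nra.
Qed.

Lemma lognormal_nonpos t : t <= 0 -> g t = 0.
Proof. intros Ht. unfold g, lognormal. destruct Rlt_dec; lra. Qed.

(* Completing the square in [ln t]: the mode is [exp (mu - sigma ^ 2)]. *)
Lemma lognormal_eq_max_mul t : 0 < t ->
  g t = lognormal_max * exp (- ((ln t - (mu - sigma ^ 2)) / (sigma * sqrt 2)) ^ 2).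
Proof.
  intros Ht. unfold g, lognormal, lognormal_max. destruct Rlt_dec; [|lra].
  assert (0 < sqrt (2 * PI)) by (apply sqrt_lt_R0; pose proof PI_RGT_0; lra).
  replace (/ (t * sigma * sqrt (2 * PI))) with (/ (sigma * sqrt (2 * PI)) * exp (- ln t))
    by (rewrite exp_Ropp, exp_ln by exact Ht; field; repeat split; lra).
  rewrite sq_div_sigma_sqrt_2, !Rmult_assoc, <- !exp_plus. do 2 f_equal. field. lra.
Qed.

Lemma lognormal_nonneg t : 0 <= g t.
Proof.
  destruct (Rle_dec t 0) as [Ht | Ht]; [rewrite lognormal_nonpos; lra|].
  rewrite lognormal_eq_max_mul by lra. pose proof lognormal_max_pos.
  pose proof (exp_pos (- ((ln t - (mu - sigma ^ 2)) / (sigma * sqrt 2)) ^ 2)). nra.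
Qed.

Lemma lognormal_le_max t : g t <= lognormal_max.
Proof.
  destruct (Rle_dec t 0) as [Ht | Ht].
  { rewrite lognormal_nonpos by lra. pose proof lognormal_max_pos. lra. }
  rewrite lognormal_eq_max_mul by lra. pose proof lognormal_max_pos.
  set (w := (ln t - (mu - sigma ^ 2)) / (sigma * sqrt 2)).
  assert (exp (- w ^ 2) <= 1) by (rewrite <- exp_0; apply exp_le_exp; pose proof (pow2_ge_0 w); lra).
  nra.
Qed.

Lemma lognormal_continuous t : continuous g t.
Proof.
  destruct (Rtotal_order t 0) as [Ht | [-> | Ht]].
  - apply continuous_ext_loc with (fun _ => 0); [|apply continuous_const].
    assert (Hp : 0 < - t) by lra. exists (mkposreal _ Hp). intros y Hy.
    change (Rabs (y - t) < - t) in Hy. rewrite lognormal_nonpos; [reflexivity|].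
    revert Hy. unfold Rabs; destruct Rcase_abs; lra.
  - apply filterlim_locally. intros eps.
    destruct (exp_neg_sq_ln_small (mu - sigma ^ 2) (sigma * sqrt 2) lognormal_max eps)
      as [d Hd]; [pose proof sqrt_2_pos; nra|].
    exists d. intros s Hs. change (Rabs (s - 0) < d) in Hs. change (Rabs (g s - g 0) < eps).
    rewrite (lognormal_nonpos 0), Rminus_0_r by lra. rewrite Rminus_0_r in Hs.
    destruct (Rle_dec s 0) as [Hs0 | Hs0].
    + rewrite lognormal_nonpos by exact Hs0. rewrite Rabs_R0. apply cond_pos.
    + rewrite Rabs_pos_eq by apply lognormal_nonneg. rewrite lognormal_eq_max_mul by lra.
      apply Hd. split; [lra|]. eapply Rle_lt_trans; [apply Rle_abs | exact Hs].
  - apply continuous_ext_loc with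
      (fun x => / (x * sigma * sqrt (2 * PI)) * exp (- (ln x - mu) ^ 2 / (2 * sigma ^ 2))).
    + exists (mkposreal _ Ht). intros y Hy. change (Rabs (y - t) < t) in Hy.
      unfold g, lognormal. destruct Rlt_dec as [_ | Hy0]; [reflexivity|].
      exfalso. revert Hy. unfold Rabs; destruct Rcase_abs; lra.
    + assert (0 < sqrt (2 * PI)) by (apply sqrt_lt_R0; pose proof PI_RGT_0; lra).
      apply ex_derive_continuous_R. auto_derive. repeat split; try lra.
      apply Rgt_not_eq. apply Rmult_lt_0_compat; [nra | lra].
Qed.

Lemma lognormal_cdf_le_max t : 0 <= t -> 0 <= cdf g t <= lognormal_max * t.
Proof.
  intros Ht. assert (Hex := ex_RInt_continuous_R g 0 t lognormal_continuous). split.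
  - apply RInt_ge_0; auto. intros; apply lognormal_nonneg.
  - apply Rle_trans with (RInt (fun _ => lognormal_max) 0 t).
    + apply RInt_le; auto; [apply ex_RInt_const|]. intros; apply lognormal_le_max.
    + rewrite RInt_const_R. lra.
Qed.

Definition lognormal_score (t : R) : R := (ln t - mu) / (sigma * sqrt 2).

(* [(1 + erf (lognormal_score t)) / 2]; it is the distribution function only for [t > 0]. *)
Definition lognormal_cdf_closed (t : R) : R := / 2 + gauss_int (lognormal_score t) / sqrt PI.

Lemma is_derive_lognormal_cdf_closed t : 0 < t -> is_derive lognormal_cdf_closed t (g t).
Proof.
  intros Ht. unfold lognormal_cdf_closed, lognormal_score.
  pose proof sqrt_2_pos. pose proof sqrt_PI_pos.
  auto_derive.
  - repeat split; auto. eexists. apply is_derive_gauss_int.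
  - rewrite Derive_gauss_int. unfold g, lognormal, gauss. destruct Rlt_dec; [|lra].
    replace (- ((ln t + - mu) * / (sigma * sqrt 2) * ((ln t + - mu) * / (sigma * sqrt 2))))
      with (- (ln t - mu) ^ 2 / (2 * sigma ^ 2))
      by (rewrite Rdiv_opp_l, <- sq_div_sigma_sqrt_2; unfold Rdiv; ring).
    rewrite sqrt_mult by (pose proof PI_RGT_0; lra). field. repeat split; lra.
Qed.

Lemma lognormal_cdf_closed_bounds t : 0 <= lognormal_cdf_closed t <= 1.
Proof.
  unfold lognormal_cdf_closed. pose proof sqrt_PI_pos.
  pose proof (gauss_int_le (lognormal_score t)).
  pose proof (gauss_int_le (- lognormal_score t)). rewrite gauss_int_odd in *.
  split.
  - apply Rle_trans with (/ 2 + (- (sqrt PI / 2)) / sqrt PI).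
    + right. field. lra.
    + apply Rplus_le_compat_l, Rmult_le_compat_r; [left; apply Rinv_0_lt_compat |]; lra.
  - apply Rle_trans with (/ 2 + (sqrt PI / 2) / sqrt PI).
    + apply Rplus_le_compat_l, Rmult_le_compat_r; [left; apply Rinv_0_lt_compat |]; lra.
    + right. field. lra.
Qed.

Lemma lognormal_cdf_closed_complement_le x :
  0 <= x -> (sqrt PI / 2 - gauss_int x) / sqrt PI <= 2 / PI * exp (- x ^ 2).
Proof.
  intros Hx. pose proof (gauss_int_tail x Hx). pose proof sqrt_PI_pos.
  assert (Hsq : sqrt PI * sqrt PI = PI) by (apply sqrt_sqrt; pose proof PI_RGT_0; lra).
  assert (HPI : 2 / PI = 2 / sqrt PI / sqrt PI) by (rewrite <- Hsq at 1; field; lra).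
  replace (2 / PI * exp (- x ^ 2)) with (2 / sqrt PI * exp (- (x * x)) / sqrt PI)
    by (rewrite HPI; replace (x ^ 2) with (x * x) by ring; field; lra).
  apply Rmult_le_compat_r; [left; apply Rinv_0_lt_compat |]; lra.
Qed.

Lemma lognormal_cdf_closed_small (eps : posreal) :
  exists d : posreal, forall e, 0 < e < d -> lognormal_cdf_closed e < eps.
Proof.
  destruct (exp_neg_sq_ln_small mu (sigma * sqrt 2) (2 / PI) eps) as [d Hd];
    [pose proof sqrt_2_pos; nra|].
  assert (Hdm : 0 < Rmin d (exp mu)) by (apply Rmin_pos; [apply cond_pos | apply exp_pos]).
  exists (mkposreal _ Hdm). simpl. intros e [He0 He].
  pose proof (Rmin_l d (exp mu)). pose proof (Rmin_r d (exp mu)).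
  assert (Hscore : 0 <= - lognormal_score e).
  { unfold lognormal_score. pose proof sqrt_2_pos.
    assert (ln e <= mu) by (rewrite <- (ln_exp mu); left; apply ln_increasing; lra).
    replace (- ((ln e - mu) / (sigma * sqrt 2))) with ((mu - ln e) / (sigma * sqrt 2))
      by (field; lra).
    apply Rdiv_le_0_compat; nra. }
  eapply Rle_lt_trans; [|apply (Hd e); lra].
  replace (lognormal_cdf_closed e)
    with ((sqrt PI / 2 - gauss_int (- lognormal_score e)) / sqrt PI)
    by (unfold lognormal_cdf_closed; rewrite gauss_int_odd; pose proof sqrt_PI_pos; field; lra).
  eapply Rle_trans; [apply lognormal_cdf_closed_complement_le, Hscore|].
  right. unfold lognormal_score. do 3 f_equal. ring.
Qed.

Lemma lognormal_cdf_eq t : 0 < t -> cdf g t = lognormal_cdf_closed t.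
Proof.
  intros Ht.
  assert (Hshift : forall e, 0 < e < t ->
            cdf g t - lognormal_cdf_closed t = cdf g e - lognormal_cdf_closed e).
  { intros e He. unfold cdf.
    rewrite <- (RInt_Chasles_R g 0 e t) by apply ex_RInt_continuous_R, lognormal_continuous.
    rewrite (RInt_antiderivative lognormal_cdf_closed g e t); [ring | lra | |].
    - intros x Hx. apply is_derive_lognormal_cdf_closed. lra.
    - intros; apply lognormal_continuous. }
  apply Rminus_diag_uniq, Rabs_le_eps_eq_0. intros eps Heps.
  assert (Heps2 : 0 < eps / 2) by lra.
  destruct (lognormal_cdf_closed_small (mkposreal _ Heps2)) as [d Hd]. simpl in Hd.
  pose proof lognormal_max_pos. pose proof (cond_pos d).
  set (e := Rmin (t / 2) (Rmin (d / 2) (eps / (2 * lognormal_max)))).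
  assert (He0 : 0 < e) by (apply Rmin_pos; [|apply Rmin_pos; [|apply Rdiv_lt_0_compat]]; lra).
  assert (Het : e <= t / 2) by apply Rmin_l.
  assert (Hed : e <= d / 2) by (eapply Rle_trans; [apply Rmin_r | apply Rmin_l]).
  assert (Hem : lognormal_max * e <= eps / 2).
  { apply Rle_trans with (lognormal_max * (eps / (2 * lognormal_max))).
    - apply Rmult_le_compat_l; [lra|]. eapply Rle_trans; [apply Rmin_r | apply Rmin_r].
    - right. field. lra. }
  rewrite (Hshift e) by lra.
  pose proof (lognormal_cdf_le_max e (Rlt_le _ _ He0)).
  pose proof (lognormal_cdf_closed_bounds e).
  assert (Hed' : e < d) by lra. specialize (Hd e (conj He0 Hed')).
  unfold Rabs; destruct Rcase_abs; lra.
Qed.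

Lemma lognormal_cdf_le_1 t : 0 <= t -> cdf g t <= 1.
Proof.
  intros [Ht | <-].
  - rewrite lognormal_cdf_eq by exact Ht. apply lognormal_cdf_closed_bounds.
  - unfold cdf. rewrite RInt_point_R. lra.
Qed.

Definition lognormal_tail_const : R := 2 / PI * exp (2 * mu + 2 * sigma ^ 2).

Lemma lognormal_survival_le u : exp mu <= u -> 1 - cdf g u <= lognormal_tail_const / u ^ 2.
Proof.
  intros Hu. pose proof (exp_pos mu). assert (Hu0 : 0 < u) by lra.
  assert (Hscore : 0 <= lognormal_score u).
  { unfold lognormal_score. pose proof sqrt_2_pos.
    assert (mu <= ln u) by (rewrite <- (ln_exp mu); destruct Hu as [Hu | <-];
                             [left; apply ln_increasing | right]; auto).
    apply Rdiv_le_0_compat; nra. }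
  rewrite lognormal_cdf_eq by exact Hu0.
  replace (1 - lognormal_cdf_closed u)
    with ((sqrt PI / 2 - gauss_int (lognormal_score u)) / sqrt PI)
    by (unfold lognormal_cdf_closed; pose proof sqrt_PI_pos; field; lra).
  assert (Hsq : exp (- lognormal_score u ^ 2) * u ^ 2 <= exp (2 * mu + 2 * sigma ^ 2)).
  { replace (u ^ 2) with (exp (ln u + ln u)) by (rewrite exp_plus, exp_ln by exact Hu0; ring).
    rewrite <- exp_plus. apply exp_le_exp.
    unfold lognormal_score. rewrite sq_div_sigma_sqrt_2.
    assert (0 <= (ln u - mu - 2 * sigma ^ 2) ^ 2 / (2 * sigma ^ 2))
      by (apply Rdiv_le_0_compat; [apply pow2_ge_0 | nra]).
    assert ((ln u - mu - 2 * sigma ^ 2) ^ 2 / (2 * sigma ^ 2)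
            = 2 * mu + 2 * sigma ^ 2 - (- ((ln u - mu) ^ 2 / (2 * sigma ^ 2)) + (ln u + ln u)))
      by (field; lra).
    lra. }
  eapply Rle_trans; [apply lognormal_cdf_closed_complement_le, Hscore|].
  unfold lognormal_tail_const. apply Rmult_le_reg_r with (u ^ 2); [apply pow_lt; lra|].
  replace (2 / PI * exp (2 * mu + 2 * sigma ^ 2) / u ^ 2 * u ^ 2)
    with (2 / PI * exp (2 * mu + 2 * sigma ^ 2))
    by (field; split; apply Rgt_not_eq; [apply PI_RGT_0 | exact Hu0]).
  apply Rmult_le_compat_l with (r := 2 / PI) in Hsq;
    [lra | apply Rdiv_le_0_compat; pose proof PI_RGT_0; lra].
Qed.

Definition lognormal_mean_bound : R := exp mu + lognormal_tail_const / exp mu.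

Lemma RInt_lognormal_survival_le T :
  0 <= T -> RInt (fun u => 1 - cdf g u) 0 T <= lognormal_mean_bound.
Proof.
  intros HT. pose proof (exp_pos mu) as Hemu.
  assert (Hex : forall a b, ex_RInt (fun u => 1 - cdf g u) a b).
  { intros a b. apply ex_RInt_continuous_R. intros u.
    apply survival_continuous; exact lognormal_continuous. }
  assert (Hconst : 0 <= lognormal_tail_const).
  { unfold lognormal_tail_const. pose proof PI_RGT_0. pose proof (exp_pos (2 * mu + 2 * sigma ^ 2)).
    apply Rmult_le_pos; [apply Rdiv_le_0_compat|]; lra. }
  assert (Hle1 : forall a b, 0 <= a <= b -> RInt (fun u => 1 - cdf g u) a b <= b - a).
  { intros a b Hab. apply Rle_trans with (RInt (fun _ => 1) a b).
    - apply RInt_le; [lra | apply Hex | apply ex_RInt_const |].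
      intros x Hx. assert (Hx0 : 0 <= x) by lra. pose proof (lognormal_cdf_le_max x Hx0). lra.
    - rewrite RInt_const_R. lra. }
  pose proof (Rdiv_le_0_compat _ _ Hconst Hemu).
  unfold lognormal_mean_bound. destruct (Rle_dec T (exp mu)) as [HTmu | HTmu].
  { pose proof (Hle1 0 T). lra. }
  rewrite <- (RInt_Chasles_R _ 0 (exp mu) T) by apply Hex.
  pose proof (Hle1 0 (exp mu)).
  assert (RInt (fun u => 1 - cdf g u) (exp mu) T <= lognormal_tail_const / exp mu).
  { apply Rle_trans with (RInt (fun u => lognormal_tail_const / u ^ 2) (exp mu) T).
    - apply RInt_le; [lra | apply Hex | |].
      + apply (ex_RInt_continuous (V := R_CompleteNormedModule)). intros z Hz.
        rewrite Rmin_left in Hz by lra. apply ex_derive_continuous_R. auto_derive. nra.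
      + intros x Hx. apply lognormal_survival_le. lra.
    - rewrite (RInt_antiderivative (fun u => - lognormal_tail_const / u)); [| lra | |].
      + assert (0 <= lognormal_tail_const / T) by (apply Rdiv_le_0_compat; lra).
        replace (- lognormal_tail_const / T - - lognormal_tail_const / exp mu)
          with (lognormal_tail_const / exp mu - lognormal_tail_const / T) by (field; lra).
        lra.
      + intros x Hx. auto_derive; [lra|]. field. lra.
      + intros x Hx. apply ex_derive_continuous_R. auto_derive. nra. }
  lra.
Qed.

End LogNormal.

(** * Well-posedness of the model with a general memory kernel *)

Section Model.

Variables (M bstar S0 I0 : R) (g : R -> R) (gmax mean : R).

Hypothesis Hbstar : 0 < bstar.
Hypothesis HI0 : 0 < I0 < M.
Hypothesis HS0 : 0 < S0.
Hypothesis Hsum : S0 + I0 = M.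
Hypothesis g_nonneg : forall t, 0 <= g t.
Hypothesis g_le_gmax : forall t, g t <= gmax.
Hypothesis g_continuous : forall t, continuous g t.
Hypothesis cdf_le_1 : forall t, 0 <= t -> cdf g t <= 1.
Hypothesis survival_le : forall T, 0 <= T -> RInt (fun u => 1 - cdf g u) 0 T <= mean.

Lemma cdf_nonneg t : 0 <= t -> 0 <= cdf g t.
Proof. intros Ht. apply RInt_ge_0; auto. apply ex_RInt_continuous_R, g_continuous. Qed.

Lemma reflected_kernel_continuous t x : continuous (fun s => g (t - s)) x.
Proof.
  apply (continuous_comp (fun s => t - s) g); [|apply g_continuous].
  apply ex_derive_continuous_R. auto_derive. auto.
Qed.

Lemma ex_RInt_conv (I : R -> R) t a b :
  (forall y, continuous I y) -> ex_RInt (fun s => g (t - s) * I s) a b.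
Proof.
  intros HI. apply ex_RInt_continuous_R. intros x.
  apply continuous_mult_R; [apply reflected_kernel_continuous | apply HI].
Qed.

Lemma RInt_reflected_kernel t : RInt (fun s => g (t - s)) 0 t = cdf g t.
Proof.
  apply RInt_reflect; apply ex_RInt_continuous_R;
    [apply g_continuous | apply reflected_kernel_continuous].
Qed.

Lemma conv_comm (I : R -> R) t :
  (forall y, continuous I y) -> conv g I t = RInt (fun u => g u * I (t - u)) 0 t.
Proof.
  intros HI. unfold conv. rewrite <- (RInt_reflect (fun s => g (t - s) * I s) t).
  - apply RInt_ext. intros y _. replace (t - (t - y)) with y by ring. reflexivity.
  - apply ex_RInt_conv, HI.
  - apply (ex_RInt_ext (fun u => g u * I (t - u))).
    + intros y _. replace (t - (t - y)) with y by ring. reflexivity.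
    + apply ex_RInt_continuous_R. intros x. apply continuous_mult_R; [apply g_continuous|].
      apply (continuous_comp (fun s => t - s) I); [|apply HI].
      apply ex_derive_continuous_R. auto_derive. auto.
Qed.

Lemma conv_abs_le (I J : R -> R) t B : 0 <= t ->
  (forall y, continuous I y) -> (forall y, continuous J y) ->
  (forall s, 0 <= s <= t -> Rabs (I s - J s) <= B) ->
  Rabs (conv g I t - conv g J t) <= B * cdf g t.
Proof.
  intros Ht HI HJ HB. unfold conv.
  rewrite <- RInt_minus_R by (apply ex_RInt_conv; auto).
  rewrite <- RInt_reflected_kernel, Rmult_comm, <- RInt_mult_const_r
    by apply ex_RInt_continuous_R, reflected_kernel_continuous.
  apply RInt_abs_le; auto.
  - apply ex_RInt_minus_R; apply ex_RInt_conv; auto.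
  - apply ex_RInt_continuous_R. intros x.
    apply continuous_mult_R; [apply reflected_kernel_continuous | apply continuous_const].
  - intros s Hs. rewrite <- Rmult_minus_distr_l, Rabs_mult, Rabs_pos_eq by apply g_nonneg.
    apply Rmult_le_compat_l; [apply g_nonneg | apply HB; lra].
Qed.

Definition infectious (I : R -> R) (t : R) : R := I t - conv g I t.

(* The model lives on [t >= 0]; the clamp [Rmax 0] extends functions constantly to [t < 0],
   so that Coquelicot's two-sided calculus applies everywhere. *)
Definition exposure (I : R -> R) (t : R) : R := RInt (fun s => infectious I (Rmax 0 s)) 0 t.

Definition solution_map (I : R -> R) (t : R) : R :=
  M - S0 * exp (- bstar * exposure I (Rmax 0 t)).

Definition lipI : R := S0 * bstar * M.

Definition admissible (I : R -> R) : Prop :=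
  (forall t, I0 <= I t <= M) /\ (forall t t', t <= t' -> I t <= I t') /\
  (forall t t', Rabs (I t - I t') <= lipI * Rabs (t - t')).

Lemma lipI_nonneg : 0 <= lipI.
Proof. unfold lipI. apply Rmult_le_pos; [apply Rmult_le_pos|]; lra. Qed.

Lemma admissible_continuous I : admissible I -> forall x, continuous I x.
Proof. intros [_ [_ HL]] x. apply lipschitz_continuous with lipI. exact HL. Qed.

Lemma conv_bounds I t : admissible I -> 0 <= t -> 0 <= conv g I t <= I t.
Proof.
  intros HK Ht. pose proof (admissible_continuous I HK) as HC. destruct HK as [Hb [Hmon _]].
  split.
  - apply RInt_ge_0; auto; [apply ex_RInt_conv, HC|].
    intros x Hx. apply Rmult_le_pos; [apply g_nonneg | specialize (Hb x); lra].
  - apply Rle_trans with (RInt (fun s => g (t - s) * I t) 0 t).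
    + apply RInt_le; auto; [apply ex_RInt_conv, HC | apply ex_RInt_conv; intros; apply continuous_const|].
      intros x Hx. apply Rmult_le_compat_l; [apply g_nonneg | apply Hmon; lra].
    + rewrite RInt_mult_const_r, RInt_reflected_kernel
        by apply ex_RInt_continuous_R, reflected_kernel_continuous.
      pose proof (cdf_le_1 t Ht). pose proof (cdf_nonneg t Ht). specialize (Hb t). nra.
Qed.

Lemma gmax_nonneg : 0 <= gmax.
Proof. apply Rle_trans with (g 0); [apply g_nonneg | apply g_le_gmax]. Qed.

Lemma conv_lipschitz I t t' : admissible I -> 0 <= t <= t' ->
  Rabs (conv g I t' - conv g I t) <= (gmax * M + lipI) * (t' - t).
Proof.
  intros HK Htt. pose proof (admissible_continuous I HK) as HC. destruct HK as [Hb [_ HL]].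
  assert (Hex : forall s a b, ex_RInt (fun u => g u * I (s - u)) a b).
  { intros s a b. apply ex_RInt_continuous_R. intros x. apply continuous_mult_R; [apply g_continuous|].
    apply (continuous_comp (fun u => s - u) I); [|apply HC].
    apply ex_derive_continuous_R. auto_derive. auto. }
  rewrite !conv_comm by exact HC.
  rewrite <- (RInt_Chasles_R (fun u => g u * I (t' - u)) 0 t t') by apply Hex.
  replace (RInt (fun u => g u * I (t' - u)) 0 t + RInt (fun u => g u * I (t' - u)) t t'
           - RInt (fun u => g u * I (t - u)) 0 t)
    with (RInt (fun u => g u * I (t' - u)) t t'
          + (RInt (fun u => g u * I (t' - u)) 0 t - RInt (fun u => g u * I (t - u)) 0 t)) by ring.
  rewrite <- RInt_minus_R by apply Hex.
  eapply Rle_trans; [apply Rabs_triang|].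
  assert (Hnew : Rabs (RInt (fun u => g u * I (t' - u)) t t') <= gmax * M * (t' - t)).
  { eapply Rle_trans.
    - apply RInt_abs_le with (h := fun _ => gmax * M); [lra | apply Hex | apply ex_RInt_const |].
      intros x _. specialize (Hb (t' - x)).
      rewrite Rabs_mult, Rabs_pos_eq, Rabs_pos_eq by (apply g_nonneg || lra).
      apply Rmult_le_compat; [apply g_nonneg | lra | apply g_le_gmax | lra].
    - rewrite RInt_const_R. lra. }
  assert (Hold : Rabs (RInt (fun u => g u * I (t' - u) - g u * I (t - u)) 0 t) <= lipI * (t' - t)).
  { eapply Rle_trans.
    - apply RInt_abs_le with (h := fun u => g u * (lipI * (t' - t))); [lra | |  |].
      + apply ex_RInt_minus_R; apply Hex.
      + apply ex_RInt_continuous_R. intros x.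
        apply continuous_mult_R; [apply g_continuous | apply continuous_const].
      + intros x _. rewrite <- Rmult_minus_distr_l, Rabs_mult, Rabs_pos_eq by apply g_nonneg.
        apply Rmult_le_compat_l; [apply g_nonneg|]. eapply Rle_trans; [apply HL|].
        right. f_equal. rewrite Rabs_pos_eq; lra.
    - rewrite RInt_mult_const_r by apply ex_RInt_continuous_R, g_continuous.
      change (RInt g 0 t) with (cdf g t).
      pose proof (cdf_le_1 t (proj1 Htt)). pose proof (cdf_nonneg t (proj1 Htt)).
      assert (0 <= lipI * (t' - t)) by (pose proof lipI_nonneg; nra).
      nra. }
  lra.
Qed.

Lemma infectious_bounds I t : admissible I -> 0 <= t -> 0 <= infectious I t <= M.
Proof.
  intros HK Ht. pose proof (conv_bounds I t HK Ht). destruct HK as [Hb _]. specialize (Hb t).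
  unfold infectious. lra.
Qed.

Definition lipX : R := lipI + (gmax * M + lipI).

Lemma infectious_clamp_lipschitz I a b : admissible I ->
  Rabs (infectious I (Rmax 0 a) - infectious I (Rmax 0 b)) <= lipX * Rabs (a - b).
Proof.
  intros HK.
  assert (Hord : forall s s', 0 <= s <= s' ->
            Rabs (infectious I s - infectious I s') <= lipX * Rabs (s - s')).
  { intros s s' Hss. pose proof (conv_lipschitz I s s' HK Hss). destruct HK as [_ [_ HL]].
    specialize (HL s s'). rewrite (Rabs_minus_sym s s'), (Rabs_pos_eq (s' - s)) in * by lra.
    unfold infectious, lipX.
    replace (I s - conv g I s - (I s' - conv g I s'))
      with ((I s - I s') + (conv g I s' - conv g I s)) by ring.
    eapply Rle_trans; [apply Rabs_triang | lra]. }
  assert (HlipX : 0 <= lipX) by (pose proof gmax_nonneg; pose proof lipI_nonneg; unfold lipX; nra).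
  eapply Rle_trans; [|apply Rmult_le_compat_l; [exact HlipX | apply Rabs_Rmax0_sub_le]].
  destruct (Rle_dec (Rmax 0 a) (Rmax 0 b)) as [Hab | Hab].
  - apply Hord. split; [apply Rmax_l | exact Hab].
  - rewrite Rabs_minus_sym, (Rabs_minus_sym (Rmax 0 a)). apply Hord. split; [apply Rmax_l | lra].
Qed.

Lemma infectious_clamp_continuous I x :
  admissible I -> continuous (fun s => infectious I (Rmax 0 s)) x.
Proof.
  intros HK. apply lipschitz_continuous with lipX. intros; apply infectious_clamp_lipschitz, HK.
Qed.

Lemma ex_RInt_infectious_clamp I a b :
  admissible I -> ex_RInt (fun s => infectious I (Rmax 0 s)) a b.
Proof. intros HK. apply ex_RInt_continuous_R. intros; apply infectious_clamp_continuous, HK. Qed.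

Lemma exposure_incr I a b : admissible I -> 0 <= a <= b ->
  0 <= exposure I b - exposure I a <= M * (b - a).
Proof.
  intros HK Hab. unfold exposure.
  rewrite <- (RInt_Chasles_R _ 0 a b) by apply ex_RInt_infectious_clamp, HK.
  rewrite Rplus_minus_l.
  assert (Hb : forall s, 0 <= infectious I (Rmax 0 s) <= M)
    by (intros s; apply infectious_bounds; [exact HK | apply Rmax_l]).
  split.
  - apply RInt_ge_0; [lra | apply ex_RInt_infectious_clamp, HK | intros; apply Hb].
  - apply Rle_trans with (RInt (fun _ => M) a b).
    + apply RInt_le; [lra | apply ex_RInt_infectious_clamp, HK | apply ex_RInt_const | intros; apply Hb].
    + rewrite RInt_const_R. lra.
Qed.

Lemma exposure_0 I : exposure I 0 = 0.
Proof. apply RInt_point_R. Qed.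

Lemma exposure_nonneg I t : admissible I -> 0 <= t -> 0 <= exposure I t.
Proof.
  intros HK Ht. pose proof (exposure_incr I 0 t HK (conj (Rle_refl 0) Ht)) as Hincr.
  rewrite exposure_0 in Hincr. lra.
Qed.

Lemma exp_neg_diff_bounds y y' : 0 <= y <= y' ->
  0 <= exp (- bstar * y) - exp (- bstar * y') <= bstar * (y' - y).
Proof.
  intros Hy. replace (exp (- bstar * y')) with (exp (- bstar * y) * exp (- bstar * (y' - y)))
    by (rewrite <- exp_plus; f_equal; ring).
  pose proof (exp_ineq1_le (- bstar * (y' - y))).
  assert (exp (- bstar * (y' - y)) <= 1) by (rewrite <- exp_0; apply exp_le_exp; nra).
  assert (exp (- bstar * y) <= 1) by (rewrite <- exp_0; apply exp_le_exp; nra).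
  pose proof (exp_pos (- bstar * y)). pose proof (exp_pos (- bstar * (y' - y))).
  assert (0 <= bstar * (y' - y)) by nra.
  split; nra.
Qed.

Lemma exp_neg_lipschitz y y' : 0 <= y -> 0 <= y' ->
  Rabs (exp (- bstar * y) - exp (- bstar * y')) <= bstar * Rabs (y - y').
Proof.
  intros Hy Hy'. destruct (Rle_dec y y') as [Hle | Hlt].
  - pose proof (exp_neg_diff_bounds y y' (conj Hy Hle)).
    rewrite Rabs_pos_eq, Rabs_minus_sym, Rabs_pos_eq by lra. lra.
  - pose proof (exp_neg_diff_bounds y' y (conj Hy' (Rlt_le _ _ (Rnot_le_lt _ _ Hlt)))).
    rewrite Rabs_minus_sym, Rabs_pos_eq, Rabs_pos_eq by lra. lra.
Qed.

Lemma exposure_clamp_lipschitz I t t' : admissible I ->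
  Rabs (exposure I (Rmax 0 t) - exposure I (Rmax 0 t')) <= M * Rabs (t - t').
Proof.
  intros HK. apply Rle_trans with (M * Rabs (Rmax 0 t - Rmax 0 t'));
    [|apply Rmult_le_compat_l; [lra | apply Rabs_Rmax0_sub_le]].
  destruct (Rle_dec (Rmax 0 t) (Rmax 0 t')) as [Hle | Hlt].
  - pose proof (exposure_incr I _ _ HK (conj (Rmax_l 0 t) Hle)).
    rewrite (Rabs_minus_sym (exposure I (Rmax 0 t))), (Rabs_minus_sym (Rmax 0 t)).
    rewrite !Rabs_pos_eq by lra. lra.
  - assert (Hle : 0 <= Rmax 0 t' <= Rmax 0 t) by (split; [apply Rmax_l | lra]).
    pose proof (exposure_incr I _ _ HK Hle).
    rewrite !Rabs_pos_eq by lra. lra.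
Qed.

Lemma solution_map_admissible I : admissible I -> admissible (solution_map I).
Proof.
  intros HK. unfold solution_map.
  assert (HY : forall t, 0 <= exposure I (Rmax 0 t))
    by (intros; apply exposure_nonneg, Rmax_l; exact HK).
  split; [|split].
  - intros t. pose proof (exp_neg_diff_bounds 0 _ (conj (Rle_refl 0) (HY t))) as Hexp.
    rewrite Rmult_0_r, exp_0 in Hexp. pose proof (exp_pos (- bstar * exposure I (Rmax 0 t))). nra.
  - intros t t' Htt. assert (Hm : Rmax 0 t <= Rmax 0 t') by (apply Rle_max_compat_l, Htt).
    pose proof (exposure_incr I _ _ HK (conj (Rmax_l 0 t) Hm)).
    assert (HYY : 0 <= exposure I (Rmax 0 t) <= exposure I (Rmax 0 t')) by (split; [apply HY | lra]).
    pose proof (exp_neg_diff_bounds _ _ HYY). nra.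
  - intros t t'.
    replace (M - S0 * exp (- bstar * exposure I (Rmax 0 t))
             - (M - S0 * exp (- bstar * exposure I (Rmax 0 t'))))
      with (- S0 * (exp (- bstar * exposure I (Rmax 0 t)) - exp (- bstar * exposure I (Rmax 0 t'))))
      by ring.
    rewrite Rabs_mult, Rabs_Ropp, Rabs_pos_eq by lra.
    pose proof (exp_neg_lipschitz _ _ (HY t) (HY t')).
    pose proof (exposure_clamp_lipschitz I t t' HK).
    pose proof (Rabs_pos (exposure I (Rmax 0 t) - exposure I (Rmax 0 t'))).
    unfold lipI.
    replace (S0 * bstar * M * Rabs (t - t')) with (S0 * (bstar * (M * Rabs (t - t')))) by ring.
    apply Rmult_le_compat_l; [lra|]. nra.
Qed.

(* Bielecki's weight: for [lam = 4 S0 bstar] the solution map halves weighted distances. *)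
Definition lam : R := 4 * S0 * bstar.

Definition exp_close (A : R) (I J : R -> R) : Prop :=
  forall r, 0 <= r -> Rabs (I r - J r) <= A * exp (lam * r).

Lemma lam_pos : 0 < lam.
Proof. unfold lam. nra. Qed.

Lemma exp_lam_ge_1 r : 0 <= r -> 1 <= exp (lam * r).
Proof. intros Hr. rewrite <- exp_0. apply exp_le_exp. pose proof lam_pos. nra. Qed.

Lemma infectious_exp_close I J A : admissible I -> admissible J -> 0 <= A ->
  exp_close A I J -> exp_close (2 * A) (infectious I) (infectious J).
Proof.
  intros HI HJ HA Hclose s Hs.
  assert (Hconv : Rabs (conv g I s - conv g J s) <= A * exp (lam * s) * cdf g s).
  { apply conv_abs_le; auto using admissible_continuous.
    intros r Hr. eapply Rle_trans; [apply Hclose; lra|].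
    apply Rmult_le_compat_l; [exact HA|]. apply exp_le_exp. pose proof lam_pos. nra. }
  pose proof (cdf_le_1 s Hs). pose proof (cdf_nonneg s Hs). pose proof (exp_pos (lam * s)).
  assert (0 <= A * exp (lam * s)) by nra.
  specialize (Hclose s Hs). unfold infectious.
  replace (I s - conv g I s - (J s - conv g J s))
    with ((I s - J s) - (conv g I s - conv g J s)) by ring.
  eapply Rle_trans; [apply Rabs_triang|]. rewrite Rabs_Ropp. nra.
Qed.

Lemma exposure_exp_close I J A t : admissible I -> admissible J -> 0 <= A ->
  exp_close A I J -> 0 <= t -> Rabs (exposure I t - exposure J t) <= 2 * A / lam * exp (lam * t).
Proof.
  intros HI HJ HA Hclose Ht. pose proof lam_pos.
  unfold exposure. rewrite <- RInt_minus_R by (apply ex_RInt_infectious_clamp; auto).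
  eapply Rle_trans.
  - apply RInt_abs_le with (h := fun s => 2 * A * exp (lam * s)); [exact Ht | | |].
    + apply ex_RInt_minus_R; apply ex_RInt_infectious_clamp; auto.
    + apply ex_RInt_continuous_R. intros x. apply ex_derive_continuous_R. auto_derive. auto.
    + intros s Hs. rewrite !Rmax_right by lra. apply infectious_exp_close; auto. lra.
  - rewrite (RInt_antiderivative (fun s => 2 * A / lam * exp (lam * s))); [| exact Ht | |].
    + rewrite Rmult_0_r, exp_0. assert (0 <= 2 * A / lam) by (apply Rdiv_le_0_compat; lra). lra.
    + intros x _. auto_derive; auto. field. lra.
    + intros x _. apply ex_derive_continuous_R. auto_derive. auto.
Qed.

Lemma solution_map_contraction I J A : admissible I -> admissible J -> 0 <= A ->
  exp_close A I J -> exp_close (A / 2) (solution_map I) (solution_map J).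
Proof.
  intros HI HJ HA Hclose t Ht. pose proof lam_pos.
  unfold solution_map. rewrite Rmax_right by exact Ht.
  replace (M - S0 * exp (- bstar * exposure I t) - (M - S0 * exp (- bstar * exposure J t)))
    with (- S0 * (exp (- bstar * exposure I t) - exp (- bstar * exposure J t))) by ring.
  rewrite Rabs_mult, Rabs_Ropp, Rabs_pos_eq by lra.
  eapply Rle_trans.
  { apply Rmult_le_compat_l; [lra|]. apply exp_neg_lipschitz; apply exposure_nonneg; auto. }
  pose proof (exposure_exp_close I J A t HI HJ HA Hclose Ht).
  apply Rle_trans with (S0 * (bstar * (2 * A / lam * exp (lam * t)))).
  - apply Rmult_le_compat_l; [lra|]. apply Rmult_le_compat_l; lra.
  - right. unfold lam. field. lra.
Qed.

Fixpoint picard (n : nat) : R -> R :=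
  match n with O => fun _ => I0 | S k => solution_map (picard k) end.

Lemma picard_admissible n : admissible (picard n).
Proof.
  induction n as [|n IH]; simpl; [|apply solution_map_admissible, IH].
  split; [|split]; intros; [lra | lra |].
  rewrite Rminus_diag, Rabs_R0. apply Rmult_le_pos; [apply lipI_nonneg | apply Rabs_pos].
Qed.

Lemma picard_clamp n r : picard n r = picard n (Rmax 0 r).
Proof.
  destruct n as [|n]; simpl; [reflexivity|]. unfold solution_map.
  rewrite (Rmax_right 0 (Rmax 0 r)) by apply Rmax_l. reflexivity.
Qed.

Lemma picard_step n : exp_close (M * (/ 2) ^ n) (picard (S n)) (picard n).
Proof.
  induction n as [|n IH].
  - intros r Hr. simpl. destruct (picard_admissible 1) as [Hb _]. specialize (Hb r). simpl in Hb.
    rewrite Rabs_pos_eq by lra. pose proof (exp_lam_ge_1 r Hr). nra.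
  - intros r Hr. change (picard (S (S n))) with (solution_map (picard (S n))).
    change (picard (S n)) with (solution_map (picard n)) at 2.
    eapply Rle_trans.
    + apply solution_map_contraction;
        [apply picard_admissible | apply picard_admissible | | exact IH | exact Hr].
      pose proof (pow_le (/ 2) n ltac:(lra)). nra.
    + right. simpl. field.
Qed.

Lemma picard_cauchy n m : (n <= m)%nat -> exp_close (2 * M * (/ 2) ^ n) (picard m) (picard n).
Proof.
  intros Hnm r Hr.
  assert (Htele : forall k, Rabs (picard (n + k) r - picard n r)
                             <= 2 * M * exp (lam * r) * ((/ 2) ^ n - (/ 2) ^ (n + k))).
  { induction k as [|k IH].
    - rewrite Nat.add_0_r, !Rminus_diag, Rabs_R0. lra.
    - rewrite Nat.add_succ_r.
      replace (picard (S (n + k)) r - picard n r)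
        with ((picard (S (n + k)) r - picard (n + k) r) + (picard (n + k) r - picard n r)) by ring.
      eapply Rle_trans; [apply Rabs_triang|]. pose proof (picard_step (n + k) r Hr).
      simpl pow. lra. }
  replace m with (n + (m - n))%nat by lia.
  eapply Rle_trans; [apply Htele|].
  pose proof (pow_le (/ 2) (n + (m - n)) ltac:(lra)). pose proof (exp_lam_ge_1 r Hr).
  assert (0 <= 2 * M * exp (lam * r)) by nra. nra.
Qed.

Definition Isol (r : R) : R := real (Lim_seq (fun n => picard n r)).

Lemma Isol_is_lim r : is_lim_seq (fun n => picard n r) (Isol r).
Proof.
  apply Lim_seq_correct', ex_lim_seq_cauchy_corr. intros eps.
  set (r' := Rmax 0 r). pose proof (Rmax_l 0 r) as Hr'. pose proof (exp_lam_ge_1 r' Hr').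
  destruct (half_pow_small (2 * M * exp (lam * r')) eps (cond_pos eps)) as [N HN].
  exists N. intros n m Hn Hm. rewrite (picard_clamp n r), (picard_clamp m r). fold r'.
  destruct (Nat.le_ge_cases n m) as [Hnm | Hmn].
  - rewrite Rabs_minus_sym. eapply Rle_lt_trans; [apply picard_cauchy; auto|].
    specialize (HN n Hn). lra.
  - eapply Rle_lt_trans; [apply picard_cauchy; auto|]. specialize (HN m Hm). lra.
Qed.

Lemma Isol_admissible : admissible Isol.
Proof.
  pose proof is_lim_seq_le_R as Hle.
  split; [|split].
  - intros t. split.
    + apply (Hle (fun _ => I0) _ _ _ (is_lim_seq_const I0) (Isol_is_lim t)).
      intros n. apply (picard_admissible n).
    + apply (Hle _ (fun _ => M) _ _ (Isol_is_lim t) (is_lim_seq_const M)).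
      intros n. apply (picard_admissible n).
  - intros t t' Htt. apply (Hle _ _ _ _ (Isol_is_lim t) (Isol_is_lim t')).
    intros n. apply (picard_admissible n), Htt.
  - intros t t'.
    apply (Hle (fun n => Rabs (picard n t - picard n t')) (fun _ => lipI * Rabs (t - t')));
      [| apply is_lim_seq_const |].
    + apply (is_lim_seq_abs _ (Finite (Isol t - Isol t'))).
      apply (is_lim_seq_minus _ _ (Isol t) (Isol t')); [apply Isol_is_lim | apply Isol_is_lim |].
      reflexivity.
    + intros n. apply (picard_admissible n).
Qed.

Lemma Isol_close n : exp_close (2 * M * (/ 2) ^ n) Isol (picard n).
Proof.
  intros r Hr.
  assert (Hlim : is_lim_seq (fun m => Rabs (picard (m + n) r - picard n r))
                            (Rabs (Isol r - picard n r))).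
  { apply (is_lim_seq_abs _ (Finite (Isol r - picard n r))).
    apply (is_lim_seq_minus _ _ (Isol r) (picard n r)); [| apply is_lim_seq_const | reflexivity].
    apply (is_lim_seq_incr_n (fun m => picard m r) n), Isol_is_lim. }
  apply (is_lim_seq_le_R _ (fun _ => 2 * M * (/ 2) ^ n * exp (lam * r)) _ _ Hlim
           (is_lim_seq_const _)).
  intros m. apply picard_cauchy; [lia | exact Hr].
Qed.

Lemma Isol_fixed t : 0 <= t -> solution_map Isol t = Isol t.
Proof.
  intros Ht. apply Rminus_diag_uniq, Rabs_le_eps_eq_0. intros eps Heps.
  pose proof (exp_lam_ge_1 t Ht).
  destruct (half_pow_small (3 * M * exp (lam * t)) eps Heps) as [N HN].
  specialize (HN N (le_n N)). apply Rlt_le in HN. eapply Rle_trans; [|exact HN].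
  replace (solution_map Isol t - Isol t)
    with ((solution_map Isol t - solution_map (picard N) t) + (picard (S N) t - Isol t))
    by (simpl; ring).
  eapply Rle_trans; [apply Rabs_triang|].
  assert (HA : 0 <= 2 * M * (/ 2) ^ N) by (pose proof (pow_le (/ 2) N ltac:(lra)); nra).
  pose proof (solution_map_contraction Isol (picard N) _ Isol_admissible (picard_admissible N) HA
                (Isol_close N) t Ht).
  pose proof (Isol_close (S N) t Ht) as Hnext. rewrite Rabs_minus_sym in Hnext. simpl pow in Hnext.
  assert (0 <= M * (/ 2) ^ N * exp (lam * t)) by (pose proof (exp_pos (lam * t)); nra).
  lra.
Qed.

Lemma Isol_continuous x : continuous Isol x.
Proof. apply admissible_continuous, Isol_admissible. Qed.

Lemma Isol_formula t : 0 <= t -> Isol t = M - S0 * exp (- bstar * exposure Isol t).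
Proof.
  intros Ht. rewrite <- (Isol_fixed t Ht) at 1. unfold solution_map.
  rewrite Rmax_right by exact Ht. reflexivity.
Qed.

Lemma is_derive_exposure I t : admissible I -> is_derive (exposure I) t (infectious I (Rmax 0 t)).
Proof.
  intros HK. apply (is_derive_RInt_R (fun s => infectious I (Rmax 0 s))).
  intros; apply infectious_clamp_continuous, HK.
Qed.

Definition dIsol (t : R) : R := bstar * (M - Isol t) * infectious Isol t.

Lemma Isol_deriv : deriv_on_nonneg Isol dIsol.
Proof.
  apply deriv_on_nonneg_of_is_derive with (fun t => M - S0 * exp (- bstar * exposure Isol t)).
  { exact Isol_formula. }
  intros t Ht.
  replace (dIsol t) with (S0 * bstar * exp (- bstar * exposure Isol t) * infectious Isol (Rmax 0 t))
    by (unfold dIsol; rewrite Rmax_right, (Isol_formula t) by exact Ht; ring).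
  pose proof (is_derive_exposure Isol t Isol_admissible) as HY.
  auto_derive; [eexists; exact HY|].
  replace (Derive (fun x : R => exposure Isol x) t) with (infectious Isol (Rmax 0 t))
    by (symmetry; apply is_derive_unique, HY).
  ring.
Qed.

Lemma dIsol_cont : cont_on_nonneg dIsol.
Proof.
  apply cont_on_nonneg_of_continuous with
    (fun t => bstar * (M - Isol t) * infectious Isol (Rmax 0 t)).
  - intros t Ht. unfold dIsol. rewrite Rmax_right by exact Ht. reflexivity.
  - intros t. apply continuous_mult_R; [|apply infectious_clamp_continuous, Isol_admissible].
    apply continuous_mult_R; [apply continuous_const|].
    apply continuous_minus_R; [apply continuous_const | apply Isol_continuous].
Qed.

Definition Ssol (t : R) : R := M - Isol t.

Lemma Ssol_Isol_C1_solution : is_C1_solution M bstar S0 I0 g Ssol Isol.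
Proof.
  assert (Hinit : Isol 0 = I0).
  { rewrite Isol_formula, exposure_0, Rmult_0_r, exp_0 by lra. lra. }
  exists (fun t => - dIsol t), dIsol.
  split; [|split; [|split; [|split; [|split; [|split; [|split]]]]]].
  - apply deriv_on_nonneg_const_minus, Isol_deriv.
  - apply Isol_deriv.
  - apply cont_on_nonneg_opp, dIsol_cont.
  - apply dIsol_cont.
  - unfold Ssol. rewrite Hinit. lra.
  - exact Hinit.
  - intros t _. reflexivity.
  - intros t _. unfold dIsol, Ssol, infectious. ring.
Qed.

Definition survival_weight (I : R -> R) (T s : R) : R := I s * (1 - cdf g (T - s)).

Lemma is_derive_survival_weight I T s :
  is_derive (fun z => survival_weight I z s) T (I s * - g (T - s)).
Proof.
  unfold survival_weight. auto_derive; [eexists; apply is_derive_cdf, g_continuous|].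
  rewrite Derive_cdf, Rmult_1_l by exact g_continuous. reflexivity.
Qed.

Lemma survival_weight_continuous I T s :
  (forall y, continuous I y) -> continuous (survival_weight I T) s.
Proof.
  intros HI. apply continuous_mult_R; [apply HI|]. apply ex_derive_continuous_R.
  auto_derive. eexists. apply is_derive_cdf, g_continuous.
Qed.

Lemma Derive_survival_weight_continuous_2d I x y : (forall z, continuous I z) ->
  continuity_2d_pt (fun u v => Derive (fun z => survival_weight I z v) u) x y.
Proof.
  intros HI. apply continuity_2d_pt_ext with (f := fun u v => I v * - g (u - v)).
  { intros u v. symmetry. apply is_derive_unique, is_derive_survival_weight. }
  apply continuity_2d_pt_mult.
  - apply continuity_1d_2d_pt_comp with (f := I) (g := fun _ v => v);
      [apply continuity_pt_filterlim, HI | apply continuity_2d_pt_id2].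
  - apply continuity_2d_pt_opp.
    apply continuity_1d_2d_pt_comp with (f := g) (g := fun u v => u - v);
      [apply continuity_pt_filterlim, g_continuous|].
    apply continuity_2d_pt_minus; [apply continuity_2d_pt_id1 | apply continuity_2d_pt_id2].
Qed.

(* Differentiation under the integral sign; the boundary term is [I T * (1 - cdf g 0) = I T]. *)
Lemma is_derive_RInt_survival_weight I T : (forall z, continuous I z) ->
  is_derive (fun T => RInt (survival_weight I T) 0 T) T (I T - conv g I T).
Proof.
  intros HI.
  replace (I T - conv g I T)
    with (RInt (fun s => Derive (fun u => survival_weight I u s) T) 0 T + survival_weight I T T * 1).
  - apply (is_derive_RInt_param_bound_comp_aux3 (survival_weight I) 0 (fun x => x) T 1).
    + exists (mkposreal _ Rlt_0_1). intros y _.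
      apply ex_RInt_continuous_R. intros; apply survival_weight_continuous, HI.
    + exists (mkposreal _ Rlt_0_1), (mkposreal _ Rlt_0_1). intros y _.
      apply ex_RInt_continuous_R. intros; apply survival_weight_continuous, HI.
    + apply is_derive_Reals, derivable_pt_lim_id.
    + exists (mkposreal _ Rlt_0_1), (mkposreal _ Rlt_0_1). intros y _ t _.
      eexists. apply is_derive_survival_weight.
    + intros t _. apply Derive_survival_weight_continuous_2d, HI.
    + exists (mkposreal _ Rlt_0_1). intros u v _ _. apply Derive_survival_weight_continuous_2d, HI.
    + apply continuity_pt_filterlim, survival_weight_continuous, HI.
  - unfold survival_weight at 2. rewrite Rminus_diag. unfold cdf at 1. rewrite RInt_point_R.
    unfold conv. rewrite (RInt_ext _ (fun s => - (g (T - s) * I s))).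
    + rewrite (RInt_opp (V := R_CompleteNormedModule)) by apply ex_RInt_conv, HI.
      change (- RInt (fun s => g (T - s) * I s) 0 T + I T * (1 - 0) * 1
              = I T - RInt (fun s => g (T - s) * I s) 0 T). ring.
    + intros x _. replace (Derive (fun u : R => survival_weight I u x) T) with (I x * - g (T - x))
        by (symmetry; apply is_derive_unique, is_derive_survival_weight).
      change (I x * - g (T - x) = - (g (T - x) * I x)). ring.
Qed.

Lemma exposure_eq_RInt_survival_weight T :
  0 <= T -> exposure Isol T = RInt (survival_weight Isol T) 0 T.
Proof.
  intros [HT | <-]; [|unfold exposure; rewrite !RInt_point_R; reflexivity].
  set (D := fun x => RInt (survival_weight Isol x) 0 x - exposure Isol x).
  assert (HD : D 0 = D T).
  { apply (eq_is_derive (V := R_NormedModule)); [|exact HT].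
    intros x Hx.
    replace (@zero R_NormedModule) with ((Isol x - conv g Isol x) - infectious Isol (Rmax 0 x))
      by (rewrite Rmax_right by lra; apply Rminus_diag).
    apply is_derive_minus_R.
    - apply is_derive_RInt_survival_weight, Isol_continuous.
    - apply is_derive_exposure, Isol_admissible. }
  unfold D in HD. rewrite RInt_point_R, exposure_0 in HD. lra.
Qed.

Lemma exposure_le_mean T : 0 <= T -> exposure Isol T <= M * mean.
Proof.
  intros HT. rewrite exposure_eq_RInt_survival_weight by exact HT.
  assert (Hrefl : forall x, continuous (fun s => 1 - cdf g (T - s)) x).
  { intros x. apply (continuous_comp (fun s => T - s) (fun u => 1 - cdf g u));
      [apply ex_derive_continuous_R; auto_derive; auto | (apply survival_continuous; exact g_continuous)]. }
  apply Rle_trans with (RInt (fun s => (1 - cdf g (T - s)) * M) 0 T).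
  - apply RInt_le; [exact HT | | |].
    + apply ex_RInt_continuous_R. intros; apply survival_weight_continuous, Isol_continuous.
    + apply ex_RInt_continuous_R. intros x. apply continuous_mult_R; [apply Hrefl | apply continuous_const].
    + intros x Hx. unfold survival_weight. destruct Isol_admissible as [Hb _]. specialize (Hb x).
      assert (HTx : 0 <= T - x) by lra. pose proof (cdf_le_1 (T - x) HTx).
      rewrite Rmult_comm. apply Rmult_le_compat_l; lra.
  - assert (Hsurv : ex_RInt (fun u => 1 - cdf g u) 0 T)
      by (apply ex_RInt_continuous_R; intros; apply survival_continuous; exact g_continuous).
    assert (Hsurv_refl : ex_RInt (fun s => 1 - cdf g (T - s)) 0 T)
      by (apply ex_RInt_continuous_R; exact Hrefl).
    rewrite RInt_mult_const_r, (RInt_reflect (fun u => 1 - cdf g u)) by assumption.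
    rewrite Rmult_comm. apply Rmult_le_compat_l; [lra | apply survival_le, HT].
Qed.

Definition Isup : R := M - S0 * exp (- bstar * (M * mean)).

Lemma Isol_le_Isup t : 0 <= t -> Isol t <= Isup.
Proof.
  intros Ht. rewrite Isol_formula by exact Ht. unfold Isup.
  pose proof (exposure_le_mean t Ht). pose proof (exposure_nonneg Isol t Isol_admissible Ht).
  assert (HY : 0 <= exposure Isol t <= M * mean) by lra.
  pose proof (exp_neg_diff_bounds _ _ HY). nra.
Qed.

Lemma Isup_lt_M : Isup < M.
Proof. unfold Isup. pose proof (exp_pos (- bstar * (M * mean))). nra. Qed.

Lemma conv_clamp f c : 0 <= c -> conv g f c = conv g (fun s => f (Rmax 0 s)) c.
Proof.
  intros Hc. unfold conv. apply RInt_ext. intros x Hx.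
  rewrite Rmin_left, Rmax_right in Hx by exact Hc. rewrite Rmax_right by lra. reflexivity.
Qed.

Lemma conv_diff_le_RInt (f h : R -> R) c : 0 <= c ->
  (forall x, continuous f x) -> (forall x, continuous h x) ->
  Rabs (conv g f c - conv g h c) <= gmax * RInt (fun r => Rabs (f r - h r)) 0 c.
Proof.
  intros Hc Hf Hh. unfold conv. rewrite <- RInt_minus_R by (apply ex_RInt_conv; auto).
  assert (Hcont : forall x, continuous (fun r => Rabs (f r - h r)) x)
    by (intros x; apply continuous_Rabs_comp, continuous_minus_R; auto).
  rewrite Rmult_comm, <- RInt_mult_const_r by (apply ex_RInt_continuous_R, Hcont).
  apply RInt_abs_le; [exact Hc | apply ex_RInt_minus_R; apply ex_RInt_conv; auto | |].
  - apply ex_RInt_continuous_R. intros x. apply continuous_mult_R; [apply Hcont | apply continuous_const].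
  - intros r _. rewrite <- Rmult_minus_distr_l, Rabs_mult, Rabs_pos_eq, Rmult_comm by apply g_nonneg.
    apply Rmult_le_compat_l; [apply Rabs_pos | apply g_le_gmax].
Qed.

Lemma infectious_bounded_on (I : R -> R) t : cont_on_nonneg I -> 0 <= t ->
  exists K, 0 <= K /\ forall c, 0 <= c <= t -> Rabs (I c - conv g I c) <= K.
Proof.
  intros HI Ht.
  assert (HIc : forall x, continuous (fun s => I (Rmax 0 s)) x)
    by (intros; apply cont_on_nonneg_clamp, HI).
  destruct (continuity_ab_maj (fun s => Rabs (I (Rmax 0 s))) 0 t Ht) as [m [Hm _]].
  { intros c _. apply continuity_pt_filterlim, (continuous_Rabs_comp (fun s => I (Rmax 0 s))), HIc. }
  set (B := Rabs (I (Rmax 0 m))) in *.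
  exists (2 * B). split; [pose proof (Rabs_pos (I (Rmax 0 m))); unfold B; lra|].
  intros c Hc. specialize (Hm c Hc) as HBc. rewrite Rmax_right in HBc by apply Hc.
  assert (Hconv0 : conv g (fun _ => 0) c = 0).
  { unfold conv. rewrite (RInt_ext _ (fun _ => 0)) by (intros; apply Rmult_0_r).
    rewrite RInt_const_R. ring. }
  assert (Hconv : Rabs (conv g (fun s => I (Rmax 0 s)) c - conv g (fun _ => 0) c) <= B * cdf g c).
  { apply conv_abs_le; [apply Hc | apply HIc | intros; apply continuous_const |].
    intros s Hs. rewrite Rminus_0_r. apply Hm. lra. }
  rewrite Hconv0, Rminus_0_r, <- conv_clamp in Hconv by apply Hc.
  pose proof (cdf_le_1 c (proj1 Hc)). pose proof (cdf_nonneg c (proj1 Hc)). pose proof (Rabs_pos (I c)).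
  unfold Rminus. eapply Rle_trans; [apply Rabs_triang|]. rewrite Rabs_Ropp. nra.
Qed.

Lemma energy_estimate (b m K G d W Y : R) : 0 < b -> 0 <= m -> 0 <= K -> 0 <= G -> 0 <= W ->
  Rabs Y <= m * (Rabs d + G * W) + K * Rabs d ->
  (b * Y) * d + d * (b * Y) + (Rabs d * W + W * Rabs d)
    <= (2 * b * (m + K) + b * m * G + 1) * (d * d + W * W).
Proof.
  intros Hb Hm HK HG HW HY.
  assert (Hdd : Rabs d * Rabs d = d * d) by (rewrite <- Rabs_mult; apply Rabs_pos_eq; nra).
  assert (HYd : Y * d <= Rabs Y * Rabs d) by (rewrite <- Rabs_mult; apply Rle_abs).
  assert (HAMGM : 2 * (Rabs d * W) <= d * d + W * W) by (pose proof (pow2_ge_0 (Rabs d - W)); nra).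
  pose proof (Rabs_pos d).
  assert (HYd' : Rabs Y * Rabs d <= (m + K) * (d * d) + m * G * (Rabs d * W)) by nra.
  assert (HbmG : 0 <= b * m * G) by (apply Rmult_le_pos; [apply Rmult_le_pos|]; lra).
  assert (H1 : b * Y * d + d * (b * Y) <= 2 * b * ((m + K) * (d * d) + m * G * (Rabs d * W)))
    by nra.
  assert (H2 : (b * m * G + 1) * (2 * (Rabs d * W)) <= (b * m * G + 1) * (d * d + W * W))
    by (apply Rmult_le_compat_l; lra).
  assert (0 <= 2 * b * (m + K) * (W * W)) by (apply Rmult_le_pos; nra).
  lra.
Qed.

Lemma C1_solution_total S I : is_C1_solution M bstar S0 I0 g S I ->
  forall t, 0 <= t -> S t + I t = M.
Proof.
  intros [dS [dI [HdS [HdI [_ [_ [HS0' [HI0' [EqI EqS]]]]]]]]] t Ht.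
  destruct (infectious_bounded_on I t (deriv_on_nonneg_cont _ _ HdI) Ht) as [K [HK HX]].
  set (p := fun s => S (Rmax 0 s) + I (Rmax 0 s) - M).
  assert (Hp : forall c, 0 <= c -> p c = S c + I c - M)
    by (intros c Hc; unfold p; rewrite Rmax_right; auto).
  assert (Hpt : p t * p t = 0).
  { apply (gronwall_vanish (fun s => p s * p s) (fun s => (dS s + dI s) * p s + p s * (dS s + dI s))
             (2 * bstar * K) t Ht).
    - intros c Hc. apply is_derive_mult_R; replace (dS c + dI c) with (dS c + dI c - 0) by ring;
        (apply is_derive_minus_R; [apply is_derive_plus_R; apply deriv_on_nonneg_clamp; auto; lra
                                   | apply (is_derive_const (V := R_NormedModule))]).
    - intros c _. apply continuity_pt_filterlim.
      assert (Hpc : continuous p c).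
      { apply continuous_minus_R; [|apply continuous_const].
        apply continuous_plus_R; apply cont_on_nonneg_clamp; eapply deriv_on_nonneg_cont; eauto. }
      apply continuous_mult_R; exact Hpc.
    - intros c Hc. rewrite Hp, EqI, EqS by lra.
      assert (Hc' : 0 <= c <= t) by lra. specialize (HX c Hc').
      pose proof (Rle_abs (- (I c - conv g I c))) as HXc. rewrite Rabs_Ropp in HXc.
      replace ((- bstar * S c * (I c - conv g I c) + bstar * (M - I c) * (I c - conv g I c))
                 * (S c + I c - M)
               + (S c + I c - M) * (- bstar * S c * (I c - conv g I c)
                 + bstar * (M - I c) * (I c - conv g I c)))
        with (2 * bstar * (- (I c - conv g I c)) * ((S c + I c - M) * (S c + I c - M))) by ring.
      apply Rmult_le_compat_r; [apply Rle_0_sqr | nra].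
    - rewrite Hp, HS0', HI0', Hsum by lra. ring.
    - apply Rle_0_sqr. }
  rewrite Hp in Hpt by exact Ht. nra.
Qed.

Lemma infectious_gap_bound (I : R -> R) c K : cont_on_nonneg I -> 0 <= c ->
  Rabs (I c - conv g I c) <= K ->
  Rabs ((M - Isol c) * ((I c - conv g I c) - infectious Isol c) - (I c - Isol c) * (I c - conv g I c))
    <= M * (Rabs (I c - Isol c) + gmax * RInt (fun r => Rabs (I (Rmax 0 r) - Isol r)) 0 c)
       + K * Rabs (I c - Isol c).
Proof.
  intros HI Hc HXc. destruct Isol_admissible as [Hb _]. specialize (Hb c).
  assert (Hconv : Rabs (conv g I c - conv g Isol c)
                  <= gmax * RInt (fun r => Rabs (I (Rmax 0 r) - Isol r)) 0 c).
  { rewrite conv_clamp by exact Hc. apply conv_diff_le_RInt; [exact Hc | | apply Isol_continuous].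
    intros x. apply cont_on_nonneg_clamp, HI. }
  assert (HXX : Rabs (I c - conv g I c - infectious Isol c)
                <= Rabs (I c - Isol c) + gmax * RInt (fun r => Rabs (I (Rmax 0 r) - Isol r)) 0 c).
  { unfold infectious. replace (I c - conv g I c - (Isol c - conv g Isol c))
      with ((I c - Isol c) - (conv g I c - conv g Isol c)) by ring.
    eapply Rle_trans; [apply Rabs_triang|]. rewrite Rabs_Ropp. lra. }
  eapply Rle_trans; [apply Rabs_triang|].
  rewrite Rabs_Ropp, !Rabs_mult, (Rabs_pos_eq (M - Isol c)) by lra.
  pose proof (Rabs_pos (I c - Isol c)). pose proof (Rabs_pos (I c - conv g I c - infectious Isol c)).
  apply Rplus_le_compat; [apply Rmult_le_compat; lra|].
  rewrite Rmult_comm. apply Rmult_le_compat_r; lra.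
Qed.

Lemma C1_solution_I_eq S I : is_C1_solution M bstar S0 I0 g S I ->
  forall t, 0 <= t -> I t = Isol t.
Proof.
  intros Hsol t Ht.
  destruct Hsol as [dS [dI [_ [HdI [_ [_ [_ [HI0' [EqI _]]]]]]]]].
  destruct (infectious_bounded_on I t (deriv_on_nonneg_cont _ _ HdI) Ht) as [K [HK HX]].
  set (d := fun s => I (Rmax 0 s) - Isol s).
  assert (Hd : forall c, 0 <= c -> d c = I c - Isol c)
    by (intros c Hc; unfold d; rewrite Rmax_right; auto).
  assert (Hdc : forall x, continuous d x).
  { intros x. apply continuous_minus_R; [|apply Isol_continuous].
    apply cont_on_nonneg_clamp. eapply deriv_on_nonneg_cont; eauto. }
  set (W := fun s => RInt (fun r => Rabs (d r)) 0 s).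
  assert (HWd : forall x, is_derive W x (Rabs (d x))) by (intros x; apply is_derive_RInt_abs, Hdc).
  assert (HWc : forall x, continuous W x)
    by (intros x; apply ex_derive_continuous_R; eexists; apply HWd).
  assert (HW0 : forall x, 0 <= x -> 0 <= W x) by (intros x Hx; apply RInt_abs_nonneg; auto).
  assert (Hdt : d t * d t + W t * W t = 0).
  { apply (gronwall_vanish (fun s => d s * d s + W s * W s)
      (fun s => ((dI s - dIsol s) * d s + d s * (dI s - dIsol s))
                + (Rabs (d s) * W s + W s * Rabs (d s)))
      (2 * bstar * (M + K) + bstar * M * gmax + 1) t Ht).
    - intros c Hc.
      assert (Hdd : is_derive d c (dI c - dIsol c)).
      { apply (is_derive_minus_R (fun s => I (Rmax 0 s)) Isol).
        - apply deriv_on_nonneg_clamp; [exact HdI | lra].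
        - apply deriv_on_nonneg_is_derive; [apply Isol_deriv | lra]. }
      apply (is_derive_plus_R (fun s => d s * d s) (fun s => W s * W s)).
      + apply (is_derive_mult_R d d); exact Hdd.
      + apply (is_derive_mult_R W W); apply HWd.
    - intros c _. apply continuity_pt_filterlim.
      apply (continuous_plus_R (fun s => d s * d s) (fun s => W s * W s));
        [apply (continuous_mult_R d d) | apply (continuous_mult_R W W)]; auto.
    - intros c Hc. assert (Hc0 : 0 <= c) by lra. rewrite Hd, EqI by exact Hc0.
      unfold dIsol.
      replace (bstar * (M - I c) * (I c - conv g I c) - bstar * (M - Isol c) * infectious Isol c)
        with (bstar * ((M - Isol c) * ((I c - conv g I c) - infectious Isol c)
                       - (I c - Isol c) * (I c - conv g I c)))
        by (unfold infectious; ring).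
      apply energy_estimate; [exact Hbstar | lra | exact HK | apply gmax_nonneg | apply HW0, Hc0 |].
      apply infectious_gap_bound; [eapply deriv_on_nonneg_cont; eauto | exact Hc0 | apply HX; lra].
    - unfold W. rewrite RInt_point_R, Hd, HI0', Isol_formula, exposure_0, Rmult_0_r, exp_0 by lra.
      rewrite <- Hsum. ring.
    - pose proof (Rle_0_sqr (d t)). pose proof (Rle_0_sqr (W t)). unfold Rsqr in *. lra. }
  rewrite Hd in Hdt by exact Ht. pose proof (HW0 t Ht). nra.
Qed.

Theorem SI_memory_well_posed :
  exists S I : R -> R,
    is_C1_solution M bstar S0 I0 g S I /\
    (forall S' I' : R -> R,
        is_C1_solution M bstar S0 I0 g S' I' ->
        forall t, 0 <= t -> S' t = S t /\ I' t = I t) /\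
    (forall t, 0 <= t -> 0 < S t < M /\ 0 < I t < M) /\
    (forall t1 t2, 0 <= t1 -> t1 <= t2 -> S t2 <= S t1) /\
    (forall t1 t2, 0 <= t1 -> t1 <= t2 -> I t1 <= I t2) /\
    (exists Sinf, 0 < Sinf /\ is_lim S p_infty Sinf) /\
    (exists Iinf, Iinf < M /\ is_lim I p_infty Iinf).
Proof.
  destruct Isol_admissible as [Hbounds [Hmono _]].
  destruct (is_lim_nondecreasing_bounded Isol Isup) as [l [Hl Hlim]];
    [intros t t' Htt; apply Hmono, Htt | exact Isol_le_Isup |].
  pose proof Isup_lt_M.
  exists Ssol, Isol. unfold Ssol.
  split; [|split; [|split; [|split; [|split; [|split]]]]].
  - exact Ssol_Isol_C1_solution.
  - intros S' I' Hsol t Ht. pose proof (C1_solution_I_eq S' I' Hsol t Ht).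
    pose proof (C1_solution_total S' I' Hsol t Ht). split; lra.
  - intros t Ht. pose proof (Isol_le_Isup t Ht). specialize (Hbounds t). split; split; lra.
  - intros t1 t2 _ Ht. specialize (Hmono t1 t2 Ht). lra.
  - intros t1 t2 _ Ht. apply Hmono, Ht.
  - exists (M - l). split; [lra|]. apply is_lim_minus'; [apply is_lim_const | exact Hlim].
  - exists l. split; [lra | exact Hlim].
Qed.

End Model.

Theorem theorem3p1 (M bstar S0 I0 mu sigma : R) :
  0 < M -> 0 < bstar -> 0 < I0 < M -> 0 < S0 < M -> S0 + I0 = M -> 0 < sigma ->
  exists S I : R -> R,
    is_C1_solution M bstar S0 I0 (lognormal mu sigma) S I /\
    (forall S' I' : R -> R,
        is_C1_solution M bstar S0 I0 (lognormal mu sigma) S' I' ->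
        forall t, 0 <= t -> S' t = S t /\ I' t = I t) /\
    (forall t, 0 <= t -> 0 < S t < M /\ 0 < I t < M) /\
    (forall t1 t2, 0 <= t1 -> t1 <= t2 -> S t2 <= S t1) /\
    (forall t1 t2, 0 <= t1 -> t1 <= t2 -> I t1 <= I t2) /\
    (exists Sinf, 0 < Sinf /\ is_lim S p_infty Sinf) /\
    (exists Iinf, Iinf < M /\ is_lim I p_infty Iinf).
Proof.
  intros _ Hbstar HI0 HS0 Hsum Hsigma.
  apply SI_memory_well_posed
    with (gmax := lognormal_max mu sigma) (mean := lognormal_mean_bound mu sigma).
  - exact Hbstar.
  - exact HI0.
  - apply HS0.
  - exact Hsum.
  - apply lognormal_nonneg, Hsigma.
  - apply lognormal_le_max, Hsigma.
  - apply lognormal_continuous, Hsigma.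
  - apply lognormal_cdf_le_1, Hsigma.
  - apply RInt_lognormal_survival_le, Hsigma.
Qed.
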